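(* Use the convention that the flow of a Hamiltonian $H$ is $\dot F=\{H,F\}$. (i) On $\mathcal C^\times_{n,d,q}$, for $k\ge1$, the flow of $H=\frac1k\operatorname{tr}Z^k$ starting at $(X,Z,V_\alpha,W_\alpha)$ is $X(t)=Xe^{-tZ^k}$, $Z(t)=Z$, $V_\alpha(t)=V_\alpha$, $W_\alpha(t)=W_\alpha$. (ii) On $\mathcal C_{n,d,q}$, for $k\geq1$, the flow of $H=\frac1k\operatorname{tr}Y^k$ starting at $(X,Y,V_\alpha,W_\alpha)$ is $X(\tau)=Xe^{-\tau Y^k}+Y^{-1}(e^{-\tau Y^k}-\mathrm{Id}_n)$, $Y(\tau)=Y$, $V_\alpha(\tau)=V_\alpha$, $W_\alpha(\tau)=W_\alpha$, where $Y^{-1}(e^{-\tau Y^k}-\mathrm{Id}_n)$ denotes the entire power series in $Y$ (defined also for singular $Y$). These flows are complete on the respective Calogero–Moser spaces.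
   Context: Fix $n,d\ge1$, $q\in\mathbb C^\times$ not a root of unity; $o(\alpha,\beta)=0,1,-1$ according as $\alpha=\beta,\alpha<\beta,\alpha>\beta$. $\mathcal M^\times_{n,d,q}$: tuples $(X,Z,V_\alpha,W_\alpha)_{\alpha=1}^d$, $X,Z\in\mathrm{GL}_n$, $V_\alpha\in\mathrm{Mat}_{1\times n}$, $W_\alpha\in\mathrm{Mat}_{n\times1}$, $\mathrm{Id}_n+W_\alpha V_\alpha$ invertible, $XZX^{-1}Z^{-1}(\mathrm{Id}_n+W_1V_1)^{-1}\cdots(\mathrm{Id}_n+W_dV_d)^{-1}=q\mathrm{Id}_n$. $\mathcal M_{n,d,q}$: tuples $(X,Y,V_\alpha,W_\alpha)$ with $X,Y\in\mathrm{Mat}_{n\times n}$, $\mathrm{Id}_n+XY$, $\mathrm{Id}_n+YX$, $\mathrm{Id}_n+W_\alpha V_\alpha$ invertible and $(\mathrm{Id}_n+XY)(\mathrm{Id}_n+YX)^{-1}(\mathrm{Id}_n+W_1V_1)^{-1}\cdots(\mathrm{Id}_n+W_dV_d)^{-1}=q\mathrm{Id}_n$. $\mathrm{GL}_n$ acts on both by conjugating $X,Y,Z$, $V\mapsto Vg^{-1}$, $W\mapsto gW$; the quotients $\mathcal C^\times_{n,d,q}=\mathcal M^\times_{n,d,q}/\!/\mathrm{GL}_n$, $\mathcal C_{n,d,q}=\mathcal M_{n,d,q}/\!/\mathrm{GL}_n$ are smooth of dimension $2nd$ and carry the Poisson brackets induced on invariant functions by the quasi-Poisson biderivations given by $\{X_{ij},X_{kl}\}=\tfrac12(\delta_{il}(X^2)_{kj}-\delta_{kj}(X^2)_{il})$;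 for $U\in\{Y,Z\}$: $\{U_{ij},U_{kl}\}=\tfrac12(\delta_{kj}(U^2)_{il}-\delta_{il}(U^2)_{kj})$; $\{X_{ij},Z_{kl}\}=\tfrac12((ZX)_{kj}\delta_{il}+\delta_{kj}(XZ)_{il}+Z_{kj}X_{il}-X_{kj}Z_{il})$; $\{X_{ij},Y_{kl}\}=\delta_{kj}\delta_{il}+\tfrac12((YX)_{kj}\delta_{il}+\delta_{kj}(XY)_{il}+Y_{kj}X_{il}-X_{kj}Y_{il})$; for $U\in\{X,Y,Z\}$: $\{U_{ij},W_{\alpha,k}\}=\tfrac12(\delta_{kj}(UW_\alpha)_i-U_{kj}W_{\alpha,i})$, $\{U_{ij},V_{\alpha,l}\}=\tfrac12((V_\alpha U)_j\delta_{il}-V_{\alpha,j}U_{il})$; $\{V_{\alpha,j},V_{\beta,l}\}=\tfrac12o(\beta,\alpha)(V_{\beta,j}V_{\alpha,l}+V_{\alpha,j}V_{\beta,l})$; $\{W_{\alpha,i},W_{\beta,k}\}=\tfrac12o(\beta,\alpha)(W_{\beta,k}W_{\alpha,i}+W_{\alpha,k}W_{\beta,i})$; $\{V_{\alpha,j},W_{\beta,k}\}=\delta_{\alpha\beta}(\delta_{kj}+\tfrac12W_{\alpha,k}V_{\alpha,j}+\tfrac12\delta_{kj}V_\alpha W_\alpha)+\tfrac12o(\alpha,\beta)(\delta_{kj}V_\alpha W_\beta+W_{\beta,k}V_{\alpha,j})$. The flow of a $\mathrm{GL}_n$-invariant $H$ is described on representatives $(X,Z,V,W)$ (resp. $(X,Y,V,W)$)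 by $\dot M_{ij}=\{H,M_{ij}\}$ for each matrix entry. *)

From Stdlib Require Import Reals ClassicalEpsilon Factorial.
From Stdlib Require Import Arith.
Open Scope R_scope.

Record C := mkC { Re : R; Im : R }.
Definition C0 : C := mkC 0 0.
Definition C1 : C := mkC 1 0.
Definition RC (r : R) : C := mkC r 0.
Definition Cadd (z w : C) : C := mkC (Re z + Re w) (Im z + Im w).
Definition Copp (z : C) : C := mkC (- Re z) (- Im z).
Definition Csub (z w : C) : C := Cadd z (Copp w).
Definition Cmul (z w : C) : C :=
  mkC (Re z * Re w - Im z * Im w) (Re z * Im w + Im z * Re w).
Definition Cnorm (z : C) : R := sqrt (Re z ^ 2 + Im z ^ 2).
Definition Cinv (z : C) : C :=
  mkC (Re z / (Re z ^ 2 + Im z ^ 2)) (- Im z / (Re z ^ 2 + Im z ^ 2)).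
Definition Cdiv (z w : C) : C := Cmul z (Cinv w).
Fixpoint Cpow (z : C) (m : nat) : C :=
  match m with O => C1 | S m' => Cmul z (Cpow z m') end.
Definition INC (m : nat) : C := RC (INR m).
Definition Chalf : C := RC (/ 2).

Fixpoint Csum (m : nat) (f : nat -> C) : C :=
  match m with O => C0 | S m' => Cadd (Csum m' f) (f m') end.

Definition Ccv (u : nat -> C) (l : C) : Prop :=
  forall eps, eps > 0 -> exists N, forall m, (m >= N)%nat -> Cnorm (Csub (u m) l) < eps.

Definition Cderiv (f : C -> C) (t L : C) : Prop :=
  forall eps, eps > 0 -> exists delta, delta > 0 /\
    forall h, h <> C0 -> Cnorm h < delta ->
      Cnorm (Csub (Cdiv (Csub (f (Cadd t h)) (f t)) h) L) < eps.

(* ---------- n x n matrices (entries with indices < n are meaningful) ---------- *)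
Definition Mat := nat -> nat -> C.
Definition M0 : Mat := fun _ _ => C0.
Definition Mid : Mat := fun i j => if Nat.eqb i j then C1 else C0.
Definition Madd (A B : Mat) : Mat := fun i j => Cadd (A i j) (B i j).
Definition Msub (A B : Mat) : Mat := fun i j => Csub (A i j) (B i j).
Definition Mscal (c : C) (A : Mat) : Mat := fun i j => Cmul c (A i j).
Definition Mmul (n : nat) (A B : Mat) : Mat :=
  fun i j => Csum n (fun l => Cmul (A i l) (B l j)).
Fixpoint Mpow (n : nat) (A : Mat) (m : nat) : Mat :=
  match m with O => Mid | S m' => Mmul n A (Mpow n A m') end.
Definition Mtr (n : nat) (A : Mat) : C := Csum n (fun i => A i i).
Definition Meq (n : nat) (A B : Mat) : Prop :=
  forall i j, (i < n)%nat -> (j < n)%nat -> A i j = B i j.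
Definition Minvertible (n : nat) (A : Mat) : Prop :=
  exists B, Meq n (Mmul n A B) Mid /\ Meq n (Mmul n B A) Mid.
(* the inverse (meaningful when A is invertible) *)
Definition Minv (n : nat) (A : Mat) : Mat :=
  epsilon (inhabits M0)
    (fun B => Meq n (Mmul n A B) Mid /\ Meq n (Mmul n B A) Mid).
Definition Mouter (w v : nat -> C) : Mat := fun i j => Cmul (w i) (v j).

Definition mseries (n : nat) (a : nat -> Mat) : Mat :=
  epsilon (inhabits M0)
    (fun E => forall i j, (i < n)%nat -> (j < n)%nat ->
       Ccv (fun m => Csum m (fun p => a p i j)) (E i j)).
Definition mexp (n : nat) (A : Mat) : Mat :=
  mseries n (fun p => Mscal (RC (/ INR (fact p))) (Mpow n A p)).
(* Y^{-1}(e^{-tau Y^k} - Id) as the entire series sum_{p>=1} (-tau)^p/p! Y^{kp-1} *)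
Definition Yinv_expm1 (n : nat) (Y : Mat) (k : nat) (tau : C) : Mat :=
  mseries n (fun p => match p with
                      | O => M0
                      | S _ => Mscal (Cmul (Cpow (Copp tau) p) (RC (/ INR (fact p))))
                                     (Mpow n Y (k * p - 1))
                      end).

(* ---------- points (X, U, V_alpha, W_alpha) ; U = Z (case i) or Y (case ii) ----
   alpha ranges over 0..d-1 (the paper's 1..d, order preserved);
   sV s alpha j = V_{alpha,j},  sW s alpha i = W_{alpha,i}. *)
Record St := mkSt { sX : Mat; sU : Mat; sV : nat -> nat -> C; sW : nat -> nat -> C }.

Definition IdWV (s : St) (a : nat) : Mat := Madd Mid (Mouter (sW s a) (sV s a)).

Fixpoint prodInv (n : nat) (s : St) (m : nat) : Mat :=
  match m with
  | O => Mid
  | S m' => Mmul n (prodInv n s m') (Minv n (IdWV s m'))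
  end.

Definition inMtimes (n d : nat) (q : C) (s : St) : Prop :=
  Minvertible n (sX s) /\ Minvertible n (sU s) /\
  (forall a, (a < d)%nat -> Minvertible n (IdWV s a)) /\
  Meq n (Mmul n (Mmul n (Mmul n (Mmul n (sX s) (sU s)) (Minv n (sX s)))
                        (Minv n (sU s)))
                (prodInv n s d))
        (Mscal q Mid).

Definition inM (n d : nat) (q : C) (s : St) : Prop :=
  let IXY := Madd Mid (Mmul n (sX s) (sU s)) in
  let IYX := Madd Mid (Mmul n (sU s) (sX s)) in
  Minvertible n IXY /\ Minvertible n IYX /\
  (forall a, (a < d)%nat -> Minvertible n (IdWV s a)) /\
  Meq n (Mmul n (Mmul n IXY (Minv n IYX)) (prodInv n s d)) (Mscal q Mid).

Inductive coord :=
| cX (i j : nat) | cU (i j : nat) | cV (a j : nat) | cW (a i : nat).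

Definition valid (n d : nat) (c : coord) : Prop :=
  match c with
  | cX i j | cU i j => (i < n)%nat /\ (j < n)%nat
  | cV a j | cW a j => (a < d)%nat /\ (j < n)%nat
  end.

Definition get (s : St) (c : coord) : C :=
  match c with
  | cX i j => sX s i j | cU i j => sU s i j
  | cV a j => sV s a j | cW a i => sW s a i
  end.

Definition upd2 (A : nat -> nat -> C) (i j : nat) (u : C) : nat -> nat -> C :=
  fun a b => if andb (Nat.eqb a i) (Nat.eqb b j) then Cadd (A a b) u else A a b.

Definition shift (s : St) (c : coord) (u : C) : St :=
  match c with
  | cX i j => mkSt (upd2 (sX s) i j u) (sU s) (sV s) (sW s)
  | cU i j => mkSt (sX s) (upd2 (sU s) i j u) (sV s) (sW s)
  | cV a j => mkSt (sX s) (sU s) (upd2 (sV s) a j u) (sW s)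
  | cW a i => mkSt (sX s) (sU s) (sV s) (upd2 (sW s) a i u)
  end.

Definition sum_coords (n d : nat) (f : coord -> C) : C :=
  Cadd (Cadd (Csum n (fun a => Csum n (fun b => f (cX a b))))
             (Csum n (fun a => Csum n (fun b => f (cU a b)))))
       (Cadd (Csum d (fun a => Csum n (fun j => f (cV a j))))
             (Csum d (fun a => Csum n (fun i => f (cW a i))))).

Definition dlt (i j : nat) : C := if Nat.eqb i j then C1 else C0.
Definition o (a b : nat) : C :=
  if Nat.eqb a b then C0 else if Nat.ltb a b then C1 else Copp C1.

Definition MWv (n : nat) (M : Mat) (w : nat -> C) (i : nat) : C :=
  Csum n (fun l => Cmul (M i l) (w l)).
Definition VMv (n : nat) (v : nat -> C) (M : Mat) (j : nat) : C :=
  Csum n (fun l => Cmul (v l) (M l j)).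
Definition VW (n : nat) (v w : nat -> C) : C := Csum n (fun l => Cmul (v l) (w l)).

Definition brMW (n : nat) (M : Mat) (w : nat -> C) (i j k : nat) : C :=
  Cmul Chalf (Csub (Cmul (dlt k j) (MWv n M w i)) (Cmul (M k j) (w i))).
Definition brMV (n : nat) (M : Mat) (v : nat -> C) (i j l : nat) : C :=
  Cmul Chalf (Csub (Cmul (VMv n v M j) (dlt i l)) (Cmul (v j) (M i l))).
Definition brXU (isY : bool) (n : nat) (X U : Mat) (i j k l : nat) : C :=
  Cadd (if isY then Cmul (dlt k j) (dlt i l) else C0)
       (Cmul Chalf
          (Cadd (Cadd (Cmul (Mmul n U X k j) (dlt i l)) (Cmul (dlt k j) (Mmul n X U i l)))
                (Csub (Cmul (U k j) (X i l)) (Cmul (X k j) (U i l))))).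
Definition brVW (n : nat) (s : St) (a j b k : nat) : C :=
  Cadd (Cmul (dlt a b)
             (Cadd (Cadd (dlt k j) (Cmul Chalf (Cmul (sW s a k) (sV s a j))))
                   (Cmul Chalf (Cmul (dlt k j) (VW n (sV s a) (sW s a))))))
       (Cmul (Cmul Chalf (o a b))
             (Cadd (Cmul (dlt k j) (VW n (sV s a) (sW s b))) (Cmul (sW s b k) (sV s a j)))).

(* {c1, c2} evaluated at the point s; isY selects the space C (true) or C^x (false) *)
Definition pb (isY : bool) (n : nat) (s : St) (c1 c2 : coord) : C :=
  let X := sX s in let U := sU s in
  match c1, c2 with
  | cX i j, cX k l =>
      Cmul Chalf (Csub (Cmul (dlt i l) (Mmul n X X k j)) (Cmul (dlt k j) (Mmul n X X i l)))
  | cU i j, cU k l =>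
      Cmul Chalf (Csub (Cmul (dlt k j) (Mmul n U U i l)) (Cmul (dlt i l) (Mmul n U U k j)))
  | cX i j, cU k l => brXU isY n X U i j k l
  | cU k l, cX i j => Copp (brXU isY n X U i j k l)
  | cX i j, cW a k => brMW n X (sW s a) i j k
  | cU i j, cW a k => brMW n U (sW s a) i j k
  | cW a k, cX i j => Copp (brMW n X (sW s a) i j k)
  | cW a k, cU i j => Copp (brMW n U (sW s a) i j k)
  | cX i j, cV a l => brMV n X (sV s a) i j l
  | cU i j, cV a l => brMV n U (sV s a) i j l
  | cV a l, cX i j => Copp (brMV n X (sV s a) i j l)
  | cV a l, cU i j => Copp (brMV n U (sV s a) i j l)
  | cV a j, cV b l =>
      Cmul (Cmul Chalf (o b a))
           (Cadd (Cmul (sV s b j) (sV s a l)) (Cmul (sV s a j) (sV s b l)))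
  | cW a i, cW b k =>
      Cmul (Cmul Chalf (o b a))
           (Cadd (Cmul (sW s b k) (sW s a i)) (Cmul (sW s a k) (sW s b i)))
  | cV a j, cW b k => brVW n s a j b k
  | cW b k, cV a j => Copp (brVW n s a j b k)
  end.

Definition pd (H : St -> C) (s : St) (c : coord) : C :=
  epsilon (inhabits C0) (fun L => Cderiv (fun u => H (shift s c u)) C0 L).

(* {H, c}(s) = sum_{c'} dH/dc'(s) {c', c}(s)  (biderivation / Leibniz rule) *)
Definition HamVF (isY : bool) (n d : nat) (H : St -> C) (s : St) (c : coord) : C :=
  sum_coords n d (fun c' => Cmul (pd H s c') (pb isY n s c' c)).

(* gamma is an integral curve (defined for all complex times) of  dF/dt = {H, F} *)
Definition is_flow (isY : bool) (n d : nat) (H : St -> C) (gamma : C -> St) : Prop :=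
  forall t c, valid n d c ->
    Cderiv (fun t' => get (gamma t') c) t (HamVF isY n d H (gamma t) c).

Definition stEq (n d : nat) (s1 s2 : St) : Prop :=
  forall c, valid n d c -> get s1 c = get s2 c.

Definition Htr (n k : nat) (s : St) : C := Cmul (Cinv (INC k)) (Mtr n (Mpow n (sU s) k)).

Definition flow1 (n k : nat) (s : St) (t : C) : St :=
  mkSt (Mmul n (sX s) (mexp n (Mscal (Copp t) (Mpow n (sU s) k)))) (sU s) (sV s) (sW s).

Definition flow2 (n k : nat) (s : St) (tau : C) : St :=
  mkSt (Madd (Mmul n (sX s) (mexp n (Mscal (Copp tau) (Mpow n (sU s) k))))
             (Yinv_expm1 n (sU s) k tau))
       (sU s) (sV s) (sW s).

Definition not_root_of_unity (q : C) : Prop :=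
  forall m, (m >= 1)%nat -> Cpow q m <> C1.

(* Only U (= Z resp. Y) enters H, and H is invariant under conjugation.  Hence
   dH/dX = dH/dV = dH/dW = 0 and dH/dU_ab = (U^(k-1))_ba, so that by the
   Leibniz rule {H, F} = sum_ab (U^(k-1))_ba {U_ab, F}.  Evaluating the
   brackets of the statement gives {H, U} = {H, V} = {H, W} = 0 and
   {H, X} = - X U^k (case U = Z), resp. {H, X} = - X U^k - U^(k-1) (case
   U = Y).  The claimed curves solve these linear equations because
   d/dt e^(-tA) = -A e^(-tA) and d/dt Y^(-1)(e^(-tY^k) - Id) = -Y^(k-1) e^(-tY^k).
   Completeness: e^(-tA) is invertible and commutes with U, so the moment-map
   equation of the point is preserved; in case (ii) one uses
   Id + X(t) Y = (Id + X Y) e^(-tY^k) and Id + Y X(t) = (Id + Y X) e^(-tY^k). *)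
From Pilot Require Import Defs.
From Stdlib Require Import Reals Lra Lia Psatz ClassicalEpsilon
  FunctionalExtensionality Factorial Setoid Morphisms.
(* Imported again so that the complex type C of Defs shadows Stdlib's
   binomial coefficient C. *)
From Pilot Require Import Defs.
Open Scope R_scope.

(** * The field of complex numbers *)

Lemma C_ext (z w : C) : Re z = Re w -> Im z = Im w -> z = w.
Proof. destruct z, w; simpl; intros; subst; reflexivity. Qed.

Lemma C_ring_theory : ring_theory C0 C1 Cadd Cmul Csub Copp (@eq C).
Proof. constructor; intros; apply C_ext; unfold Csub; simpl; ring. Qed.
Add Ring Cring : C_ring_theory.

Lemma C1_neq_C0 : C1 <> C0.
Proof. intro H. assert (Re C1 = Re C0) by (rewrite H; auto). simpl in *; lra. Qed.

Lemma Cnz_sq (z : C) : z <> C0 -> Re z ^ 2 + Im z ^ 2 <> 0.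
Proof.
  intros Hz Hs. apply Hz. destruct z as [a b]; simpl in *.
  assert (a = 0) by nra. assert (b = 0) by nra. subst. reflexivity.
Qed.

Lemma Cinv_l (z : C) : z <> C0 -> Cmul (Cinv z) z = C1.
Proof.
  intros Hz. pose proof (Cnz_sq z Hz) as Hs. destruct z as [a b]; simpl in *.
  apply C_ext; simpl; field; contradict Hs; nra.
Qed.

Lemma C_field_theory : field_theory C0 C1 Cadd Cmul Csub Copp Cdiv Cinv (@eq C).
Proof. constructor; [exact C_ring_theory | exact C1_neq_C0 | reflexivity | exact Cinv_l]. Qed.
Add Field Cfield : C_field_theory.

Lemma INC_0 : INC 0 = C0.
Proof. apply C_ext; simpl; ring. Qed.

Lemma INC_S m : INC (S m) = Cadd (INC m) C1.
Proof. apply C_ext; cbn [INC RC Cadd C1 Re Im]; [rewrite S_INR|]; ring. Qed.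

Lemma INC_neq0 k : (1 <= k)%nat -> INC k <> C0.
Proof.
  intros Hk E. assert (Re (INC k) = 0) by (rewrite E; reflexivity).
  unfold INC, RC in *; simpl in *. assert (0 < INR k) by (apply lt_0_INR; lia). lra.
Qed.

Lemma Cpow_mul x y p : Cpow (Cmul x y) p = Cmul (Cpow x p) (Cpow y p).
Proof. induction p; simpl; [ring | rewrite IHp; ring]. Qed.

(* 1/(p+1)! times (p+1) is 1/p!: the coefficient identity behind termwise
   differentiation of exponential-type series. *)
Lemma fact_INC p : Cmul (INC (S p)) (RC (/ INR (fact (S p)))) = RC (/ INR (fact p)).
Proof.
  apply C_ext; cbn [INC RC Cmul Re Im]; [|ring].
  rewrite fact_simpl, mult_INR. pose proof (INR_fact_lt_0 p).
  assert (INR (S p) <> 0) by (rewrite S_INR; pose proof (pos_INR p); lra). field. lra.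
Qed.

Lemma Chalf_double z : Cmul Chalf (Cadd z z) = z.
Proof. unfold Chalf. apply C_ext; destruct z; simpl; field. Qed.

Lemma Cnorm_ge0 z : 0 <= Cnorm z.
Proof. apply sqrt_pos. Qed.

Lemma Cnorm_sq z : Cnorm z * Cnorm z = Re z ^ 2 + Im z ^ 2.
Proof. unfold Cnorm. rewrite sqrt_sqrt; nra. Qed.

Lemma Cnorm_mul z w : Cnorm (Cmul z w) = Cnorm z * Cnorm w.
Proof. unfold Cnorm. rewrite <- sqrt_mult by nra. f_equal. destruct z, w; simpl; ring. Qed.

Lemma Cnorm_RC r : Cnorm (RC r) = Rabs r.
Proof.
  unfold Cnorm, RC; cbn [Re Im]. replace (r ^ 2 + 0 ^ 2) with (r * r) by ring.
  apply sqrt_Rsqr_abs.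
Qed.

Lemma Cnorm_C0 : Cnorm C0 = 0.
Proof. change C0 with (RC 0). rewrite Cnorm_RC. apply Rabs_R0. Qed.

Lemma Cnorm_C1 : Cnorm C1 = 1.
Proof. change C1 with (RC 1). rewrite Cnorm_RC. apply Rabs_R1. Qed.

Lemma Cnorm_eq0 z : Cnorm z = 0 -> z = C0.
Proof.
  intros H. pose proof (Cnorm_sq z) as Hs. rewrite H in Hs.
  destruct z as [a b]; simpl in *. apply C_ext; simpl; nra.
Qed.

Lemma Cnorm_pos z : z <> C0 -> 0 < Cnorm z.
Proof. intros H. destruct (Cnorm_ge0 z); auto. exfalso; apply H, Cnorm_eq0; auto. Qed.

Lemma Cnorm_triangle z w : Cnorm (Cadd z w) <= Cnorm z + Cnorm w.
Proof.
  pose proof (Cnorm_sq z) as Hz. pose proof (Cnorm_sq w) as Hw.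
  pose proof (Cnorm_sq (Cadd z w)) as Hzw.
  pose proof (Cnorm_ge0 z). pose proof (Cnorm_ge0 w). pose proof (Cnorm_ge0 (Cadd z w)).
  destruct z as [a b], w as [c d]; cbn [Cadd Re Im] in *.
  set (u := Cnorm (mkC a b)) in *. set (v := Cnorm (mkC c d)) in *.
  set (s := Cnorm (Cadd _ _)) in *.
  (* Cauchy-Schwarz: a c + b d <= |z| |w| *)
  assert (Hcs : a * c + b * d <= u * v).
  { destruct (Rle_dec (a * c + b * d) 0) as [Hl|Hl]; [nra|].
    apply Rsqr_incr_0_var; unfold Rsqr; [|nra].
    assert (u * u * (v * v) - (a * c + b * d) * (a * c + b * d) = (a * d - b * c) * (a * d - b * c))
      by (rewrite Hz, Hw; ring).
    assert (u * v * (u * v) = u * u * (v * v)) by ring.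
    pose proof (Rle_0_sqr (a * d - b * c)). unfold Rsqr in *. lra. }
  apply Rsqr_incr_0_var; unfold Rsqr; nra.
Qed.

Lemma Cnorm_opp z : Cnorm (Copp z) = Cnorm z.
Proof. unfold Cnorm; simpl; f_equal; ring. Qed.

Lemma Cnorm_sub_sym z w : Cnorm (Csub z w) = Cnorm (Csub w z).
Proof. replace (Csub z w) with (Copp (Csub w z)) by ring. apply Cnorm_opp. Qed.

Lemma Cnorm_sub_tri a b c : Cnorm (Csub a b) <= Cnorm (Csub a c) + Cnorm (Csub c b).
Proof. replace (Csub a b) with (Cadd (Csub a c) (Csub c b)) by ring. apply Cnorm_triangle. Qed.

Lemma Re_le z : Rabs (Re z) <= Cnorm z.
Proof.
  pose proof (Cnorm_sq z). pose proof (Cnorm_ge0 z).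
  apply Rsqr_incr_0_var; [|auto]. rewrite <- Rsqr_abs. unfold Rsqr. nra.
Qed.

Lemma Im_le z : Rabs (Im z) <= Cnorm z.
Proof.
  pose proof (Cnorm_sq z). pose proof (Cnorm_ge0 z).
  apply Rsqr_incr_0_var; [|auto]. rewrite <- Rsqr_abs. unfold Rsqr. nra.
Qed.

Lemma Cnorm_le_ReIm z : Cnorm z <= Rabs (Re z) + Rabs (Im z).
Proof.
  pose proof (Cnorm_sq z). pose proof (Cnorm_ge0 z).
  pose proof (Rabs_pos (Re z)). pose proof (Rabs_pos (Im z)).
  apply Rsqr_incr_0_var; [|nra]. unfold Rsqr.
  pose proof (Rsqr_abs (Re z)). pose proof (Rsqr_abs (Im z)). unfold Rsqr in *. nra.
Qed.

Lemma Cnorm_pow z p : Cnorm (Cpow z p) = Cnorm z ^ p.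
Proof. induction p; simpl; [apply Cnorm_C1 | rewrite Cnorm_mul, IHp; reflexivity]. Qed.

Lemma Cnorm_INC m : Cnorm (INC m) = INR m.
Proof. unfold INC. rewrite Cnorm_RC. apply Rabs_right, Rle_ge, pos_INR. Qed.

Lemma Cnorm_inv z : z <> C0 -> Cnorm (Cinv z) = / Cnorm z.
Proof.
  intros H. pose proof (Cnorm_pos z H).
  assert (E : Cnorm (Cinv z) * Cnorm z = 1) by (rewrite <- Cnorm_mul, Cinv_l, Cnorm_C1; auto).
  apply (Rmult_eq_reg_r (Cnorm z)); [|lra]. rewrite E. field. lra.
Qed.

Lemma Cnorm_div a b : b <> C0 -> Cnorm (Cdiv a b) = Cnorm a / Cnorm b.
Proof. intros. unfold Cdiv. rewrite Cnorm_mul, Cnorm_inv; auto. Qed.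

Lemma Cnorm_small_eq a b : (forall e, e > 0 -> Cnorm (Csub a b) < e) -> a = b.
Proof.
  intros H. assert (Hz : Cnorm (Csub a b) = 0).
  { destruct (Cnorm_ge0 (Csub a b)) as [Hp|]; auto. specialize (H _ Hp). lra. }
  apply Cnorm_eq0 in Hz. replace a with (Cadd (Csub a b) b) by ring. rewrite Hz. ring.
Qed.

Lemma small_prod a b B e : 0 <= B -> Cnorm a <= B -> Cnorm b < e / (B + 1) -> e > 0 ->
  Cnorm (Cmul a b) < e.
Proof.
  intros HB Ha Hb He. rewrite Cnorm_mul. pose proof (Cnorm_ge0 a). pose proof (Cnorm_ge0 b).
  apply Rle_lt_trans with ((B + 1) * Cnorm b); [nra|].
  apply Rlt_le_trans with ((B + 1) * (e / (B + 1))); [apply Rmult_lt_compat_l; lra|].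
  right; field; lra.
Qed.

Lemma Csum_ext m f g : (forall l, (l < m)%nat -> f l = g l) -> Csum m f = Csum m g.
Proof. induction m; simpl; intros; auto. rewrite IHm, H; auto. Qed.

Lemma Csum_add m f g : Csum m (fun l => Cadd (f l) (g l)) = Cadd (Csum m f) (Csum m g).
Proof. induction m; simpl; [ring | rewrite IHm; ring]. Qed.

Lemma Csum_opp m f : Csum m (fun l => Copp (f l)) = Copp (Csum m f).
Proof. induction m; simpl; [ring | rewrite IHm; ring]. Qed.

Lemma Csum_sub m f g : Csum m (fun l => Csub (f l) (g l)) = Csub (Csum m f) (Csum m g).
Proof. induction m; simpl; [ring | rewrite IHm; ring]. Qed.

Lemma Csum_scal_l m c f : Csum m (fun l => Cmul c (f l)) = Cmul c (Csum m f).
Proof. induction m; simpl; [ring | rewrite IHm; ring]. Qed.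

Lemma Csum_scal_r m c f : Csum m (fun l => Cmul (f l) c) = Cmul (Csum m f) c.
Proof. induction m; simpl; [ring | rewrite IHm; ring]. Qed.

Lemma Csum_zero m f : (forall l, (l < m)%nat -> f l = C0) -> Csum m f = C0.
Proof. induction m; simpl; intros; auto. rewrite IHm, H; auto. ring. Qed.

Lemma Csum_swap m n f :
  Csum m (fun i => Csum n (fun j => f i j)) = Csum n (fun j => Csum m (fun i => f i j)).
Proof. induction m; simpl; [symmetry; apply Csum_zero; auto | rewrite IHm, <- Csum_add; reflexivity]. Qed.

Lemma Csum_shift m f : Csum (S m) f = Cadd (f O) (Csum m (fun q => f (S q))).
Proof. induction m; simpl; [ring | simpl in IHm; rewrite IHm; ring]. Qed.

Lemma dlt_sym i j : dlt i j = dlt j i.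
Proof. unfold dlt. rewrite Nat.eqb_sym; auto. Qed.

Lemma Csum_dlt_l m j f : (j < m)%nat -> Csum m (fun l => Cmul (dlt l j) (f l)) = f j.
Proof.
  induction m; intros H; [lia|]. simpl. unfold dlt at 2. destruct (Nat.eq_dec j m).
  - subst. rewrite Nat.eqb_refl, Csum_zero; [ring|].
    intros l Hl. unfold dlt. replace (Nat.eqb l m) with false by (symmetry; apply Nat.eqb_neq; lia). ring.
  - rewrite IHm by lia. replace (Nat.eqb m j) with false by (symmetry; apply Nat.eqb_neq; lia). ring.
Qed.

Lemma Csum_dlt_r m j f : (j < m)%nat -> Csum m (fun l => Cmul (f l) (dlt l j)) = f j.
Proof. intros. rewrite <- (Csum_dlt_l m j f) by auto. apply Csum_ext; intros; ring. Qed.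

Lemma Csum_dlt_l' m j f : (j < m)%nat -> Csum m (fun l => Cmul (dlt j l) (f l)) = f j.
Proof. intros. rewrite <- (Csum_dlt_l m j f) by auto. apply Csum_ext; intros; rewrite dlt_sym; ring. Qed.

Fixpoint Rsum (m : nat) (f : nat -> R) : R :=
  match m with O => 0 | S m' => Rsum m' f + f m' end.

Lemma sum_f_R0_Rsum f m : sum_f_R0 f m = Rsum (S m) f.
Proof. induction m; simpl; [ring | simpl in IHm; rewrite IHm; ring]. Qed.

Lemma Re_Csum m f : Re (Csum m f) = Rsum m (fun p => Re (f p)).
Proof. induction m; simpl; auto. rewrite IHm; auto. Qed.

Lemma Im_Csum m f : Im (Csum m f) = Rsum m (fun p => Im (f p)).
Proof. induction m; simpl; auto. rewrite IHm; auto. Qed.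

Lemma Cnorm_Csum m f : Cnorm (Csum m f) <= Rsum m (fun p => Cnorm (f p)).
Proof.
  induction m; simpl; [rewrite Cnorm_C0; lra|].
  pose proof (Cnorm_triangle (Csum m f) (f m)). lra.
Qed.

Lemma Rsum_le m f g : (forall p, (p < m)%nat -> f p <= g p) -> Rsum m f <= Rsum m g.
Proof.
  induction m; simpl; intros H; [lra|].
  pose proof (H m ltac:(lia)). pose proof (IHm ltac:(intros; apply H; lia)). lra.
Qed.

Lemma Rsum_ext m f g : (forall p, (p < m)%nat -> f p = g p) -> Rsum m f = Rsum m g.
Proof. induction m; simpl; intros H; [lra|]. rewrite H, IHm; auto. Qed.

Lemma Rsum_scal_l m c f : Rsum m (fun p => c * f p) = c * Rsum m f.
Proof. induction m; simpl; [ring | rewrite IHm; ring]. Qed.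

Lemma Rsum_nonneg m f : (forall p, 0 <= f p) -> 0 <= Rsum m f.
Proof. induction m; simpl; intros H; [lra|]. pose proof (H m). pose proof (IHm H). lra. Qed.

Lemma Rsum_ge_term m f l : (forall p, 0 <= f p) -> (l < m)%nat -> f l <= Rsum m f.
Proof.
  induction m; intros H Hl; [lia|]. simpl. destruct (Nat.eq_dec l m).
  - subst. pose proof (Rsum_nonneg m f H). lra.
  - pose proof (IHm H ltac:(lia)). pose proof (H m). lra.
Qed.

Lemma Ccv_unique u l1 l2 : Ccv u l1 -> Ccv u l2 -> l1 = l2.
Proof.
  intros H1 H2. apply Cnorm_small_eq. intros e He.
  destruct (H1 (e / 2)) as [N1 HN1]; [lra|]. destruct (H2 (e / 2)) as [N2 HN2]; [lra|].
  specialize (HN1 (max N1 N2) ltac:(lia)); specialize (HN2 (max N1 N2) ltac:(lia)).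
  pose proof (Cnorm_sub_tri l1 l2 (u (max N1 N2))) as H.
  rewrite (Cnorm_sub_sym l1 (u _)) in H. lra.
Qed.

Lemma Ccv_ext u v l : (forall m, u m = v m) -> Ccv u l -> Ccv v l.
Proof. intros H. replace v with u; auto. apply functional_extensionality; auto. Qed.

Lemma Ccv_const l : Ccv (fun _ => l) l.
Proof. intros e He. exists O. intros. replace (Csub l l) with C0 by ring. rewrite Cnorm_C0; lra. Qed.

Lemma Ccv_add u v l1 l2 : Ccv u l1 -> Ccv v l2 -> Ccv (fun m => Cadd (u m) (v m)) (Cadd l1 l2).
Proof.
  intros H1 H2 e He. destruct (H1 (e / 2)) as [N1 HN1]; [lra|].
  destruct (H2 (e / 2)) as [N2 HN2]; [lra|]. exists (max N1 N2). intros m Hm.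
  specialize (HN1 m ltac:(lia)); specialize (HN2 m ltac:(lia)).
  replace (Csub (Cadd (u m) (v m)) (Cadd l1 l2)) with (Cadd (Csub (u m) l1) (Csub (v m) l2)) by ring.
  pose proof (Cnorm_triangle (Csub (u m) l1) (Csub (v m) l2)). lra.
Qed.

Lemma Ccv_scal c u l : Ccv u l -> Ccv (fun m => Cmul c (u m)) (Cmul c l).
Proof.
  intros H e He. pose proof (Cnorm_ge0 c).
  destruct (H (e / (Cnorm c + 1))) as [N HN]; [apply Rdiv_lt_0_compat; lra|].
  exists N. intros m Hm. replace (Csub (Cmul c (u m)) (Cmul c l)) with (Cmul c (Csub (u m) l)) by ring.
  apply (small_prod _ _ (Cnorm c)); auto; lra.
Qed.

Lemma Ccv_opp u l : Ccv u l -> Ccv (fun m => Copp (u m)) (Copp l).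
Proof.
  intros H. apply (Ccv_ext (fun m => Cmul (Copp C1) (u m))); [intros; ring|].
  replace (Copp l) with (Cmul (Copp C1) l) by ring. apply Ccv_scal; auto.
Qed.

Lemma Ccv_sub u v l1 l2 : Ccv u l1 -> Ccv v l2 -> Ccv (fun m => Csub (u m) (v m)) (Csub l1 l2).
Proof. intros. apply Ccv_add; auto. apply Ccv_opp; auto. Qed.

Lemma Ccv_shift u l : Ccv (fun m => u (S m)) l <-> Ccv u l.
Proof.
  split; intros H e He; destruct (H e He) as [N HN].
  - exists (S N). intros [|m] Hm; [lia|]. apply HN; lia.
  - exists N. intros m Hm. apply HN; lia.
Qed.

Lemma Ccv_Csum n (f : nat -> nat -> C) (L : nat -> C) :
  (forall l, (l < n)%nat -> Ccv (fun m => f m l) (L l)) ->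
  Ccv (fun m => Csum n (fun l => f m l)) (Csum n L).
Proof.
  induction n; intros H; simpl; [apply Ccv_const|].
  apply Ccv_add; [apply IHn; intros; apply H; lia | apply H; lia].
Qed.

Lemma Ccv_bound u l B : (forall m, Cnorm (u m) <= B) -> Ccv u l -> Cnorm l <= B.
Proof.
  intros Hb H. apply Rnot_lt_le. intro Hlt.
  destruct (H (Cnorm l - B)) as [N HN]; [lra|]. specialize (HN N (le_n _)). specialize (Hb N).
  pose proof (Cnorm_triangle (u N) (Csub l (u N))) as Ht.
  replace (Cadd (u N) (Csub l (u N))) with l in Ht by ring.
  rewrite Cnorm_sub_sym in HN. lra.
Qed.

Lemma Ccv_ReIm u l : Un_cv (fun m => Re (u m)) (Re l) -> Un_cv (fun m => Im (u m)) (Im l) -> Ccv u l.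
Proof.
  intros H1 H2 e He. destruct (H1 (e / 2)) as [N1 HN1]; [lra|].
  destruct (H2 (e / 2)) as [N2 HN2]; [lra|]. exists (max N1 N2). intros m Hm.
  specialize (HN1 m ltac:(lia)); specialize (HN2 m ltac:(lia)). unfold R_dist in *.
  pose proof (Cnorm_le_ReIm (Csub (u m) l)). unfold Csub, Cadd, Copp in *; cbn [Re Im] in *.
  unfold Rminus in *. lra.
Qed.

Lemma real_series_conv (a c : nat -> R) L : (forall p, Rabs (a p) <= c p) ->
  Un_cv (fun N => sum_f_R0 c N) L -> exists l, Un_cv (fun N => sum_f_R0 a N) l.
Proof.
  intros Hb Hc.
  destruct (Rseries_CV_comp (fun p => a p + c p) (fun p => 2 * c p)) as [l Hl].
  { intros p. pose proof (Hb p). pose proof (Rle_abs (a p)). pose proof (Rle_abs (- a p)).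
    rewrite Rabs_Ropp in *. lra. }
  { exists (2 * L). apply (Un_cv_ext (fun N => 2 * sum_f_R0 c N)).
    - intros; rewrite scal_sum; apply sum_eq; intros; ring.
    - apply CV_mult; auto. intros e He. exists O; intros. unfold R_dist. rewrite Rminus_diag, Rabs_R0; lra. }
  exists (l - L). apply (Un_cv_ext (fun N => sum_f_R0 (fun p => a p + c p) N - sum_f_R0 c N)).
  - intros. rewrite <- minus_sum. apply sum_eq; intros; ring.
  - apply CV_minus; auto.
Qed.

Lemma exp_series_cv K x :
  Un_cv (fun N => sum_f_R0 (fun p => K * (x ^ p / INR (fact p))) N) (K * exp x).
Proof.
  apply (Un_cv_ext (fun N => K * E1 x N)).
  - intros; unfold E1; rewrite scal_sum; apply sum_eq; intros; unfold Rdiv; ring.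
  - apply CV_mult; [|apply E1_cvg].
    intros e He. exists O; intros. unfold R_dist. rewrite Rminus_diag, Rabs_R0; lra.
Qed.

Lemma series_conv (b : nat -> C) K x :
  (forall p, Cnorm (b p) <= K * (x ^ p / INR (fact p))) -> exists l, Ccv (fun m => Csum m b) l.
Proof.
  intros Hb.
  destruct (real_series_conv (fun p => Re (b p)) _ _
              (fun p => Rle_trans _ _ _ (Re_le (b p)) (Hb p)) (exp_series_cv K x)) as [lr Hr].
  destruct (real_series_conv (fun p => Im (b p)) _ _
              (fun p => Rle_trans _ _ _ (Im_le (b p)) (Hb p)) (exp_series_cv K x)) as [li Hi].
  exists (mkC lr li). apply Ccv_shift, Ccv_ReIm; simpl.
  - apply (Un_cv_ext (fun N => sum_f_R0 (fun p => Re (b p)) N)); auto.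
    intros; rewrite Re_Csum, sum_f_R0_Rsum; auto.
  - apply (Un_cv_ext (fun N => sum_f_R0 (fun p => Im (b p)) N)); auto.
    intros; rewrite Im_Csum, sum_f_R0_Rsum; auto.
Qed.

Lemma exp_partial_le x m : 0 <= x -> Rsum m (fun p => x ^ p / INR (fact p)) <= exp x.
Proof.
  intros Hx. destruct m as [|m]; [simpl; pose proof (exp_pos x); lra|].
  replace (Rsum (S m) (fun p => x ^ p / INR (fact p))) with (E1 x m).
  - apply growing_ineq; [|apply E1_cvg]. intro N. unfold E1. cbn [sum_f_R0].
    assert (0 <= / INR (fact (S N)) * x ^ S N).
    { apply Rmult_le_pos; [left; apply Rinv_0_lt_compat, INR_fact_lt_0 | apply pow_le; auto]. }
    lra.
  - unfold E1. rewrite sum_f_R0_Rsum. apply Rsum_ext; intros; unfold Rdiv; ring.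
Qed.

(** * Complex derivatives *)

Lemma Cderiv_unique f t L1 L2 : Cderiv f t L1 -> Cderiv f t L2 -> L1 = L2.
Proof.
  intros H1 H2. apply Cnorm_small_eq. intros e He.
  destruct (H1 (e / 2)) as [d1 [Hd1 K1]]; [lra|].
  destruct (H2 (e / 2)) as [d2 [Hd2 K2]]; [lra|].
  pose proof (Rmin_glb_lt d1 d2 0 Hd1 Hd2). pose proof (Rmin_l d1 d2). pose proof (Rmin_r d1 d2).
  set (h := RC (Rmin d1 d2 / 2)).
  assert (Hh0 : h <> C0).
  { intro E. assert (Re h = 0) by (rewrite E; reflexivity). unfold h in *; simpl in *. lra. }
  assert (Hn : Cnorm h = Rmin d1 d2 / 2) by (unfold h; rewrite Cnorm_RC; apply Rabs_right; lra).
  specialize (K1 h Hh0 ltac:(lra)). specialize (K2 h Hh0 ltac:(lra)).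
  set (q := Cdiv (Csub (f (Cadd t h)) (f t)) h) in *.
  pose proof (Cnorm_sub_tri L1 L2 q) as Ht. rewrite (Cnorm_sub_sym L1 q) in Ht. lra.
Qed.

Lemma Cderiv_ext f g t L : (forall u, f u = g u) -> Cderiv f t L -> Cderiv g t L.
Proof. intros H. replace g with f; auto. apply functional_extensionality; auto. Qed.

Lemma Cderiv_const c t : Cderiv (fun _ => c) t C0.
Proof.
  intros e He. exists 1. split; [lra|]. intros h Hh _.
  replace (Csub (Cdiv (Csub c c) h) C0) with C0 by (field; auto). rewrite Cnorm_C0. lra.
Qed.

Lemma Cderiv_translate c t : Cderiv (fun u => Cadd c u) t C1.
Proof.
  intros e He. exists 1. split; [lra|]. intros h Hh _.
  replace (Csub (Cdiv (Csub (Cadd c (Cadd t h)) (Cadd c t)) h) C1) with C0 by (field; auto).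
  rewrite Cnorm_C0; lra.
Qed.

Lemma Cderiv_add f g t L1 L2 : Cderiv f t L1 -> Cderiv g t L2 ->
  Cderiv (fun u => Cadd (f u) (g u)) t (Cadd L1 L2).
Proof.
  intros H1 H2 e He.
  destruct (H1 (e / 2)) as [d1 [Hd1 K1]]; [lra|].
  destruct (H2 (e / 2)) as [d2 [Hd2 K2]]; [lra|].
  exists (Rmin d1 d2). split; [apply Rmin_glb_lt; auto|].
  intros h Hh Hn. pose proof (Rmin_l d1 d2). pose proof (Rmin_r d1 d2).
  specialize (K1 h Hh ltac:(lra)). specialize (K2 h Hh ltac:(lra)).
  set (qf := Csub (Cdiv (Csub (f (Cadd t h)) (f t)) h) L1) in *.
  set (qg := Csub (Cdiv (Csub (g (Cadd t h)) (g t)) h) L2) in *.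
  replace (Csub (Cdiv (Csub (Cadd (f (Cadd t h)) (g (Cadd t h))) (Cadd (f t) (g t))) h) (Cadd L1 L2))
    with (Cadd qf qg) by (unfold qf, qg; field; auto).
  pose proof (Cnorm_triangle qf qg). lra.
Qed.

Lemma Cderiv_scal c f t L : Cderiv f t L -> Cderiv (fun u => Cmul c (f u)) t (Cmul c L).
Proof.
  intros H e He. pose proof (Cnorm_ge0 c).
  destruct (H (e / (Cnorm c + 1))) as [d [Hd K]]; [apply Rdiv_lt_0_compat; lra|].
  exists d. split; auto. intros h Hh Hn. specialize (K h Hh Hn).
  replace (Csub (Cdiv (Csub (Cmul c (f (Cadd t h))) (Cmul c (f t))) h) (Cmul c L))
    with (Cmul c (Csub (Cdiv (Csub (f (Cadd t h)) (f t)) h) L)) by (field; auto).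
  apply (small_prod _ _ (Cnorm c)); auto; lra.
Qed.

Lemma Cderiv_Csum n (f : nat -> C -> C) (L : nat -> C) t :
  (forall l, (l < n)%nat -> Cderiv (f l) t (L l)) ->
  Cderiv (fun u => Csum n (fun l => f l u)) t (Csum n L).
Proof.
  induction n; intros H; simpl; [apply Cderiv_const|].
  apply (Cderiv_add (fun u => Csum n (fun l => f l u)) (f n)); [apply IHn; intros|]; apply H; lia.
Qed.

Lemma Cderiv_cont f t L : Cderiv f t L -> forall e, e > 0 -> exists d, d > 0 /\
  forall h, Cnorm h < d -> Cnorm (Csub (f (Cadd t h)) (f t)) < e.
Proof.
  intros H e He. destruct (H 1) as [d [Hd K]]; [lra|]. pose proof (Cnorm_ge0 L).
  exists (Rmin d (e / (Cnorm L + 2))). split; [apply Rmin_glb_lt; auto; apply Rdiv_lt_0_compat; lra|].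
  intros h Hn. pose proof (Rmin_l d (e / (Cnorm L + 2))). pose proof (Rmin_r d (e / (Cnorm L + 2))).
  destruct (classic (h = C0)) as [E|E].
  - subst. replace (Csub (f (Cadd t C0)) (f t)) with C0 by (replace (Cadd t C0) with t by ring; ring).
    rewrite Cnorm_C0; lra.
  - specialize (K h E ltac:(lra)).
    set (r := Csub (Cdiv (Csub (f (Cadd t h)) (f t)) h) L) in *.
    replace (Csub (f (Cadd t h)) (f t)) with (Cmul h (Cadd r L)) by (unfold r; field; auto).
    pose proof (Cnorm_triangle r L). rewrite Cnorm_mul. pose proof (Cnorm_ge0 h).
    assert (Cnorm h * (Cnorm L + 2) < e).
    { apply Rlt_le_trans with (e / (Cnorm L + 2) * (Cnorm L + 2));
        [apply Rmult_lt_compat_r; lra | right; field; lra]. }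
    pose proof (Cnorm_ge0 (Cadd r L)). nra.
Qed.

Lemma Cderiv_mul f g t L1 L2 : Cderiv f t L1 -> Cderiv g t L2 ->
  Cderiv (fun u => Cmul (f u) (g u)) t (Cadd (Cmul L1 (g t)) (Cmul (f t) L2)).
Proof.
  intros H1 H2 e He.
  set (Bg := Cnorm (g t) + 1). set (B1 := Cnorm L1). set (Bf := Cnorm (f t)).
  assert (0 <= Bg) by (pose proof (Cnorm_ge0 (g t)); unfold Bg; lra).
  assert (0 <= B1) by apply Cnorm_ge0. assert (0 <= Bf) by apply Cnorm_ge0.
  destruct (H1 (e / 3 / (Bg + 1))) as [d1 [Hd1 K1]]; [apply Rdiv_lt_0_compat; lra|].
  destruct (H2 (e / 3 / (Bf + 1))) as [d2 [Hd2 K2]]; [apply Rdiv_lt_0_compat; lra|].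
  destruct (Cderiv_cont g t L2 H2 (Rmin 1 (e / 3 / (B1 + 1)))) as [d3 [Hd3 K3]].
  { apply Rmin_glb_lt; [lra | apply Rdiv_lt_0_compat; lra]. }
  exists (Rmin d1 (Rmin d2 d3)). split; [repeat apply Rmin_glb_lt; auto|].
  intros h Hh Hn.
  pose proof (Rmin_l d1 (Rmin d2 d3)). pose proof (Rmin_r d1 (Rmin d2 d3)).
  pose proof (Rmin_l d2 d3). pose proof (Rmin_r d2 d3).
  specialize (K1 h Hh ltac:(lra)). specialize (K2 h Hh ltac:(lra)). specialize (K3 h ltac:(lra)).
  pose proof (Rmin_l 1 (e / 3 / (B1 + 1))). pose proof (Rmin_r 1 (e / 3 / (B1 + 1))).
  set (qf := Csub (Cdiv (Csub (f (Cadd t h)) (f t)) h) L1) in *.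
  set (qg := Csub (Cdiv (Csub (g (Cadd t h)) (g t)) h) L2) in *.
  set (dg := Csub (g (Cadd t h)) (g t)) in *.
  (* the difference quotient error splits into three small products *)
  replace (Csub (Cdiv (Csub (Cmul (f (Cadd t h)) (g (Cadd t h))) (Cmul (f t) (g t))) h)
              (Cadd (Cmul L1 (g t)) (Cmul (f t) L2)))
    with (Cadd (Cadd (Cmul (g (Cadd t h)) qf) (Cmul L1 dg)) (Cmul (f t) qg))
    by (unfold qf, qg, dg; field; auto).
  assert (Cnorm (g (Cadd t h)) <= Bg).
  { replace (g (Cadd t h)) with (Cadd (g t) dg) by (unfold dg; ring).
    pose proof (Cnorm_triangle (g t) dg). unfold Bg; lra. }
  pose proof (small_prod (g (Cadd t h)) qf Bg (e / 3) ltac:(auto) ltac:(auto) ltac:(auto) ltac:(lra)).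
  pose proof (small_prod L1 dg B1 (e / 3) ltac:(auto) ltac:(unfold B1; lra) ltac:(lra) ltac:(lra)).
  pose proof (small_prod (f t) qg Bf (e / 3) ltac:(auto) ltac:(unfold Bf; lra) ltac:(auto) ltac:(lra)).
  pose proof (Cnorm_triangle (Cadd (Cmul (g (Cadd t h)) qf) (Cmul L1 dg)) (Cmul (f t) qg)).
  pose proof (Cnorm_triangle (Cmul (g (Cadd t h)) qf) (Cmul L1 dg)).
  lra.
Qed.

(* Along the real line s |-> s t, any real functional P bounded by the
   modulus and compatible with subtraction (here Re or Im) turns G into a
   real function with zero derivative. *)
Lemma zero_deriv_along_ray (G : C -> C) (P : C -> R) t :
  (forall z, Cderiv G z C0) -> t <> C0 ->
  (forall z, Rabs (P z) <= Cnorm z) -> (forall a b, P (Csub a b) = P a - P b) ->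
  forall s, derivable_pt_lim (fun s => P (G (Cmul (RC s) t))) s 0.
Proof.
  intros HG Ht HP HPs s e He. pose proof (Cnorm_pos t Ht) as HT.
  destruct (HG (Cmul (RC s) t) (e / Cnorm t)) as [d [Hd K]]; [apply Rdiv_lt_0_compat; lra|].
  assert (Hdp : 0 < d / Cnorm t) by (apply Rdiv_lt_0_compat; lra).
  exists (mkposreal _ Hdp). simpl. intros h Hh Hhn.
  set (hh := Cmul (RC h) t).
  assert (Hnh : Cnorm hh = Rabs h * Cnorm t) by (unfold hh; rewrite Cnorm_mul, Cnorm_RC; reflexivity).
  pose proof (Rabs_pos_lt h Hh).
  assert (Hhh : hh <> C0).
  { intro E. assert (Cnorm hh = 0) by (rewrite E; apply Cnorm_C0). nra. }
  assert (Hn : Cnorm hh < d).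
  { rewrite Hnh. apply Rlt_le_trans with (d / Cnorm t * Cnorm t);
      [apply Rmult_lt_compat_r; lra | right; field; lra]. }
  specialize (K hh Hhh Hn).
  replace (Cadd (Cmul (RC s) t) hh) with (Cmul (RC (s + h)) t) in K
    by (unfold hh; apply C_ext; destruct t; simpl; ring).
  set (D := Csub (G (Cmul (RC (s + h)) t)) (G (Cmul (RC s) t))) in *.
  replace (Csub (Cdiv D hh) C0) with (Cdiv D hh) in K by ring.
  rewrite Cnorm_div, Hnh in K by auto.
  rewrite Rminus_0_r. unfold Rdiv. rewrite Rabs_mult, Rabs_inv, <- HPs. fold D.
  pose proof (HP D).
  assert (Cnorm D < e * Rabs h).
  { apply (Rmult_lt_compat_r (Rabs h * Cnorm t)) in K; [|nra].
    replace (Cnorm D / (Rabs h * Cnorm t) * (Rabs h * Cnorm t)) with (Cnorm D) in K by (field; lra).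
    replace (e / Cnorm t * (Rabs h * Cnorm t)) with (e * Rabs h) in K by (field; lra). auto. }
  apply Rmult_lt_reg_r with (Rabs h); auto. rewrite Rmult_assoc, Rinv_l by lra. lra.
Qed.

Lemma Cderiv_zero_const (G : C -> C) : (forall t, Cderiv G t C0) -> forall t, G t = G C0.
Proof.
  intros HG t. destruct (classic (t = C0)) as [Et|Et]; [subst; auto|].
  assert (Hc : forall P : C -> R, (forall z, Rabs (P z) <= Cnorm z) ->
             (forall a b, P (Csub a b) = P a - P b) -> P (G t) = P (G C0)).
  { intros P HP HPs. set (g := fun s => P (G (Cmul (RC s) t))).
    assert (pr : derivable g) by (intro s; exists 0; apply (zero_deriv_along_ray G P t); auto).
    assert (Hcst : constant g).
    { apply (null_derivative_1 g pr). intro x. apply derive_pt_eq_0.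
      apply (zero_deriv_along_ray G P t); auto. }
    specialize (Hcst 1 0). unfold g in Hcst.
    replace (Cmul (RC 1) t) with t in Hcst by (apply C_ext; destruct t; simpl; ring).
    replace (Cmul (RC 0) t) with C0 in Hcst by (apply C_ext; destruct t; simpl; ring). auto. }
  apply C_ext; [apply (Hc Re) | apply (Hc Im)]; try apply Re_le; try apply Im_le; intros; simpl; ring.
Qed.

(** * Power series with exponential-type coefficient bounds *)

Definition psum (a : nat -> C) (t : C) (m : nat) : C := Csum m (fun p => Cmul (a p) (Cpow t p)).
Definition deriv_coef (a : nat -> C) (p : nat) : C := Cmul (INC (S p)) (a (S p)).

(* Coefficients bounded by K R^p / p! give an entire series. *)
Definition exp_bounded (a : nat -> C) (K R : R) : Prop :=
  forall p, Cnorm (a p) <= K * (R ^ p / INR (fact p)).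

Lemma psum_conv a K R t : 0 <= R -> exp_bounded a K R -> exists l, Ccv (psum a t) l.
Proof.
  intros HR Ha. apply (series_conv _ K (R * Cnorm t)). intros p.
  rewrite Cnorm_mul, Cnorm_pow, Rpow_mult_distr.
  pose proof (pow_le (Cnorm t) p (Cnorm_ge0 t)). pose proof (Ha p). pose proof (INR_fact_lt_0 p).
  replace (K * (R ^ p * Cnorm t ^ p / INR (fact p))) with (K * (R ^ p / INR (fact p)) * Cnorm t ^ p)
    by (field; lra).
  apply Rmult_le_compat_r; auto.
Qed.

Lemma psum_at_0 a : Ccv (psum a C0) (a O).
Proof.
  apply Ccv_shift, (Ccv_ext (fun _ => a O)); [|apply Ccv_const].
  intros m. unfold psum. rewrite Csum_shift, Csum_zero; [simpl; ring | intros; simpl; ring].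
Qed.

Definition pow_remainder (t h : C) (p : nat) : C :=
  Csub (Csub (Cpow (Cadd t h) p) (Cpow t p)) (Cmul (Cmul (INC p) h) (Cpow t (pred p))).

Lemma pow_remainder_S t h p :
  pow_remainder t h (S p) =
  Cadd (Cmul (Cadd t h) (pow_remainder t h p)) (Cmul (Cmul (INC p) (Cmul h h)) (Cpow t (pred p))).
Proof.
  unfold pow_remainder. destruct p as [|p].
  - simpl. rewrite (INC_S 0), INC_0. ring.
  - cbn [pred Cpow]. rewrite !INC_S. ring.
Qed.

Lemma pow_remainder_bound t h p : Cnorm h <= 1 ->
  Cnorm (pow_remainder t h p) <= Cnorm h ^ 2 * (INR p ^ 2 * (Cnorm t + 1) ^ p).
Proof.
  intros Hh. set (T := Cnorm t) in *. set (H := Cnorm h) in *.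
  assert (HT : 0 <= T) by apply Cnorm_ge0. assert (HH : 0 <= H) by apply Cnorm_ge0.
  induction p as [|p IH].
  - unfold pow_remainder. simpl. rewrite INC_0.
    replace (Csub (Csub C1 C1) (Cmul (Cmul C0 h) C1)) with C0 by ring. rewrite Cnorm_C0. nra.
  - rewrite pow_remainder_S.
    pose proof (Cnorm_triangle (Cmul (Cadd t h) (pow_remainder t h p))
                               (Cmul (Cmul (INC p) (Cmul h h)) (Cpow t (pred p)))) as Htri.
    rewrite !Cnorm_mul, Cnorm_INC, Cnorm_pow in Htri. fold T H in Htri.
    pose proof (Cnorm_triangle t h) as Hth. fold T H in Hth.
    pose proof (Cnorm_ge0 (pow_remainder t h p)).
    assert (Hpow : T ^ pred p <= (T + 1) ^ p).
    { destruct p as [|p]; simpl; [lra|].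
      apply Rle_trans with ((T + 1) ^ p); [apply pow_incr; lra|].
      pose proof (pow_le (T + 1) p ltac:(lra)). nra. }
    assert (HTp : 0 <= (T + 1) ^ p) by (apply pow_le; lra).
    pose proof (pos_INR p). rewrite S_INR.
    replace ((T + 1) ^ S p) with ((T + 1) * (T + 1) ^ p) by reflexivity.
    set (P := (T + 1) ^ p) in *. set (x := INR p) in *.
    assert (Cnorm (Cadd t h) * Cnorm (pow_remainder t h p) <= (T + 1) * (H ^ 2 * (x ^ 2 * P)))
      by (apply Rmult_le_compat; try apply Cnorm_ge0; lra).
    assert (x * (H * H) * T ^ pred p <= x * (H * H) * P) by (apply Rmult_le_compat_l; nra).
    (* (T+1) x^2 P + x P <= (x+1)^2 (T+1) P *)
    assert (Hx : x * P <= (2 * x + 1) * (T + 1) * P) by (apply Rmult_le_compat_r; nra).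
    assert (H ^ 2 * (x * P) <= H ^ 2 * ((2 * x + 1) * (T + 1) * P)) by (apply Rmult_le_compat_l; nra).
    nra.
Qed.

Lemma sq_le_pow4 p : INR p ^ 2 <= 4 ^ p.
Proof.
  induction p as [|p IH]; [simpl; lra|].
  destruct p as [|p]; [simpl; lra|].
  set (y := INR (S p)) in *.
  assert (1 <= y) by (unfold y; rewrite S_INR; pose proof (pos_INR p); lra).
  rewrite S_INR. fold y. change (4 ^ S (S p)) with (4 * 4 ^ S p).
  assert (0 <= (y - 1) * (3 * y + 1)) by (apply Rmult_le_pos; lra).
  nra.
Qed.

Lemma psum_increment a t h m :
  Csum (S m) (fun p => Cmul (a p) (pow_remainder t h p)) =
  Csub (Csub (psum a (Cadd t h) (S m)) (psum a t (S m))) (Cmul h (psum (deriv_coef a) t m)).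
Proof.
  assert (E : Cmul h (psum (deriv_coef a) t m) =
              Csum (S m) (fun p => Cmul (a p) (Cmul (Cmul (INC p) h) (Cpow t (pred p))))).
  { rewrite Csum_shift, INC_0. unfold psum. rewrite <- Csum_scal_l.
    replace (Cmul (a 0%nat) (Cmul (Cmul C0 h) (Cpow t (pred 0)))) with C0 by ring.
    transitivity (Cadd C0 (Csum m (fun l => Cmul h (Cmul (deriv_coef a l) (Cpow t l))))); [ring|].
    f_equal. apply Csum_ext; intros. unfold deriv_coef. simpl pred. ring. }
  rewrite E. unfold psum. rewrite <- !Csum_sub. apply Csum_ext; intros. unfold pow_remainder. ring.
Qed.

Lemma psum_remainder a K R F G t h : 0 <= K -> 0 <= R -> exp_bounded a K R -> Cnorm h <= 1 ->
  Ccv (psum a (Cadd t h)) (F (Cadd t h)) -> Ccv (psum a t) (F t) -> Ccv (psum (deriv_coef a) t) (G t) ->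
  Cnorm (Csub (Csub (F (Cadd t h)) (F t)) (Cmul h (G t)))
    <= Cnorm h ^ 2 * (K * exp (4 * R * (Cnorm t + 1))).
Proof.
  intros HK HR Ha Hh HFh HF HG.
  set (T := Cnorm t) in *. assert (HT : 0 <= T) by apply Cnorm_ge0.
  set (X := 4 * R * (T + 1)). assert (HX : 0 <= X) by (unfold X; nra).
  set (r := Cnorm h) in *. assert (Hr : 0 <= r) by apply Cnorm_ge0.
  apply (Ccv_bound (fun m => Csum (S m) (fun p => Cmul (a p) (pow_remainder t h p)))).
  - intro m. eapply Rle_trans; [apply Cnorm_Csum|].
    apply Rle_trans with (Rsum (S m) (fun p => r ^ 2 * K * (X ^ p / INR (fact p)))).
    + apply Rsum_le. intros p _. rewrite Cnorm_mul.
      pose proof (pow_remainder_bound t h p Hh).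
      pose proof (Ha p). pose proof (INR_fact_lt_0 p). pose proof (sq_le_pow4 p).
      pose proof (pow_le R p HR). pose proof (pow_le (T + 1) p ltac:(lra)).
      apply Rle_trans with (K * (R ^ p / INR (fact p)) * (r ^ 2 * (INR p ^ 2 * (T + 1) ^ p))).
      { apply Rmult_le_compat; try apply Cnorm_ge0; auto. }
      unfold X. rewrite !Rpow_mult_distr. unfold Rdiv.
      assert (0 <= K * / INR (fact p) * r ^ 2 * (R ^ p * (T + 1) ^ p)).
      { repeat apply Rmult_le_pos; try apply pow_le; try lra. left; apply Rinv_0_lt_compat; lra. }
      nra.
    + rewrite Rsum_scal_l, Rmult_assoc.
      apply Rmult_le_compat_l; [nra|]. apply Rmult_le_compat_l; auto. apply exp_partial_le; auto.
  - apply (Ccv_ext (fun m => Csub (Csub (psum a (Cadd t h) (S m)) (psum a t (S m)))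
                                  (Cmul h (psum (deriv_coef a) t m)))).
    + intros; rewrite psum_increment; auto.
    + apply Ccv_sub; [apply Ccv_sub; apply (Ccv_shift (fun m => psum _ _ m)); auto | apply Ccv_scal; auto].
Qed.

Lemma psum_deriv a K R F G : 0 <= K -> 0 <= R -> exp_bounded a K R ->
  (forall t, Ccv (psum a t) (F t)) -> (forall t, Ccv (psum (deriv_coef a) t) (G t)) ->
  forall t, Cderiv F t (G t).
Proof.
  intros HK HR Ha HF HG t eps Heps.
  set (B := K * exp (4 * R * (Cnorm t + 1))).
  assert (HB : 0 <= B) by (unfold B; pose proof (exp_pos (4 * R * (Cnorm t + 1))); nra).
  exists (Rmin 1 (eps / (B + 1))). split; [apply Rmin_glb_lt; [lra | apply Rdiv_lt_0_compat; lra]|].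
  intros h Hh Hn. pose proof (Rmin_l 1 (eps / (B + 1))). pose proof (Rmin_r 1 (eps / (B + 1))).
  pose proof (psum_remainder a K R F G t h HK HR Ha ltac:(lra) (HF _) (HF _) (HG _)) as HL. fold B in HL.
  set (r := Cnorm h) in *. assert (Hr : 0 < r) by (apply Cnorm_pos; auto).
  set (L := Csub (Csub (F (Cadd t h)) (F t)) (Cmul h (G t))) in *.
  replace (Csub (Cdiv (Csub (F (Cadd t h)) (F t)) h) (G t)) with (Cdiv L h) by (unfold L; field; auto).
  rewrite Cnorm_div by auto. fold r.
  apply Rle_lt_trans with (r * B).
  { apply Rmult_le_reg_r with r; auto. unfold Rdiv. rewrite Rmult_assoc, Rinv_l by lra.
    replace (r * B * r) with (r ^ 2 * B) by ring. lra. }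
  apply Rle_lt_trans with (r * (B + 1)); [nra|].
  apply Rlt_le_trans with (eps / (B + 1) * (B + 1)); [apply Rmult_lt_compat_r; lra | right; field; lra].
Qed.

(** * Matrix algebra on the n x n block *)

(* Equality of the entries with indices < n, wrapped in a record so that it
   can serve as a setoid relation for rewriting. *)
Record Mequiv (n : nat) (A B : Mat) : Prop := mkMequiv { unMequiv : Meq n A B }.

Lemma Mequiv_intro n A B :
  (forall i j, (i < n)%nat -> (j < n)%nat -> A i j = B i j) -> Mequiv n A B.
Proof. intros H; constructor; exact H. Qed.

Lemma Mequiv_elim n A B i j : Mequiv n A B -> (i < n)%nat -> (j < n)%nat -> A i j = B i j.
Proof. intros [H] Hi Hj; apply H; auto. Qed.

Lemma Mequiv_Meq n A B : Mequiv n A B <-> Meq n A B.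
Proof. split; [intros [H]; auto | intros H; constructor; auto]. Qed.

#[global] Instance Mequiv_equiv n : Equivalence (Mequiv n).
Proof.
  constructor.
  - intro A; apply Mequiv_intro; auto.
  - intros A B H; apply Mequiv_intro; intros; symmetry; apply (Mequiv_elim n A B); auto.
  - intros A B D H1 H2; apply Mequiv_intro; intros.
    rewrite (Mequiv_elim n A B), (Mequiv_elim n B D); auto.
Qed.

#[global] Instance Mmul_proper n : Proper (Mequiv n ==> Mequiv n ==> Mequiv n) (Mmul n).
Proof.
  intros A A' HA B B' HB. apply Mequiv_intro; intros i j Hi Hj. apply Csum_ext; intros l Hl.
  rewrite (Mequiv_elim n A A'), (Mequiv_elim n B B'); auto.
Qed.

#[global] Instance Madd_proper n : Proper (Mequiv n ==> Mequiv n ==> Mequiv n) Madd.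
Proof.
  intros A A' HA B B' HB. apply Mequiv_intro; intros i j Hi Hj. unfold Madd.
  rewrite (Mequiv_elim n A A'), (Mequiv_elim n B B'); auto.
Qed.

#[global] Instance Msub_proper n : Proper (Mequiv n ==> Mequiv n ==> Mequiv n) Msub.
Proof.
  intros A A' HA B B' HB. apply Mequiv_intro; intros i j Hi Hj. unfold Msub.
  rewrite (Mequiv_elim n A A'), (Mequiv_elim n B B'); auto.
Qed.

#[global] Instance Mscal_proper n c : Proper (Mequiv n ==> Mequiv n) (Mscal c).
Proof.
  intros A A' HA. apply Mequiv_intro; intros i j Hi Hj. unfold Mscal.
  rewrite (Mequiv_elim n A A'); auto.
Qed.

Lemma Mmul_entry n X Y i j : Mmul n X Y i j = Csum n (fun l => Cmul (X i l) (Y l j)).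
Proof. reflexivity. Qed.

Lemma Mmul_assoc n A B D : Mmul n (Mmul n A B) D = Mmul n A (Mmul n B D).
Proof.
  apply functional_extensionality; intro i; apply functional_extensionality; intro j. unfold Mmul.
  transitivity (Csum n (fun l => Csum n (fun m => Cmul (A i m) (Cmul (B m l) (D l j))))).
  - apply Csum_ext; intros. rewrite <- Csum_scal_r. apply Csum_ext; intros; ring.
  - rewrite Csum_swap. apply Csum_ext; intros. rewrite <- Csum_scal_l. auto.
Qed.

Lemma Mmul_id_l n A : Mequiv n (Mmul n Mid A) A.
Proof. apply Mequiv_intro; intros i j Hi Hj. apply (Csum_dlt_l' n i (fun l => A l j)); auto. Qed.

Lemma Mmul_id_r n A : Mequiv n (Mmul n A Mid) A.
Proof. apply Mequiv_intro; intros i j Hi Hj. apply (Csum_dlt_r n j (fun l => A i l)); auto. Qed.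

Lemma Mmul_add_l n A B D : Mmul n (Madd A B) D = Madd (Mmul n A D) (Mmul n B D).
Proof.
  apply functional_extensionality; intro i; apply functional_extensionality; intro j.
  unfold Mmul, Madd. rewrite <- Csum_add. apply Csum_ext; intros; ring.
Qed.

Lemma Mmul_add_r n A B D : Mmul n D (Madd A B) = Madd (Mmul n D A) (Mmul n D B).
Proof.
  apply functional_extensionality; intro i; apply functional_extensionality; intro j.
  unfold Mmul, Madd. rewrite <- Csum_add. apply Csum_ext; intros; ring.
Qed.

Lemma Mmul_sub_l n A B D : Mmul n (Msub A B) D = Msub (Mmul n A D) (Mmul n B D).
Proof.
  apply functional_extensionality; intro i; apply functional_extensionality; intro j.
  unfold Mmul, Msub. rewrite <- Csum_sub. apply Csum_ext; intros; ring.
Qed.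

Lemma Mmul_scal_l n c A B : Mmul n (Mscal c A) B = Mscal c (Mmul n A B).
Proof.
  apply functional_extensionality; intro i; apply functional_extensionality; intro j.
  unfold Mmul, Mscal. rewrite <- Csum_scal_l. apply Csum_ext; intros; ring.
Qed.

Lemma Mmul_scal_r n c A B : Mmul n A (Mscal c B) = Mscal c (Mmul n A B).
Proof.
  apply functional_extensionality; intro i; apply functional_extensionality; intro j.
  unfold Mmul, Mscal. rewrite <- Csum_scal_l. apply Csum_ext; intros; ring.
Qed.

Lemma Mpow_S_r n A p : Mequiv n (Mpow n A (S p)) (Mmul n (Mpow n A p) A).
Proof.
  induction p; simpl.
  - rewrite Mmul_id_l, Mmul_id_r. reflexivity.
  - simpl in IHp. rewrite Mmul_assoc, <- IHp. reflexivity.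
Qed.

Lemma Mpow_add n A a b : Mequiv n (Mmul n (Mpow n A a) (Mpow n A b)) (Mpow n A (a + b)).
Proof. induction a; simpl; [apply Mmul_id_l | rewrite Mmul_assoc, IHa; reflexivity]. Qed.

Lemma Mpow_comm n A a b :
  Mequiv n (Mmul n (Mpow n A a) (Mpow n A b)) (Mmul n (Mpow n A b) (Mpow n A a)).
Proof. rewrite !Mpow_add, Nat.add_comm. reflexivity. Qed.

Lemma Mpow_comm_self n A b : Mequiv n (Mmul n A (Mpow n A b)) (Mmul n (Mpow n A b) A).
Proof. rewrite <- Mpow_S_r. reflexivity. Qed.

Lemma Mpow_mul n A k p : Mequiv n (Mpow n (Mpow n A k) p) (Mpow n A (k * p)).
Proof.
  induction p; simpl; [rewrite Nat.mul_0_r; reflexivity|].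
  rewrite IHp, Mpow_add. replace (k + k * p)%nat with (k * S p)%nat by lia. reflexivity.
Qed.

Lemma Mpow_scal n c A p : Mequiv n (Mpow n (Mscal c A) p) (Mscal (Cpow c p) (Mpow n A p)).
Proof.
  induction p; simpl.
  - apply Mequiv_intro; intros i j _ _. unfold Mscal. ring.
  - rewrite IHp, Mmul_scal_l, Mmul_scal_r. apply Mequiv_intro; intros i j _ _. unfold Mscal. ring.
Qed.

Lemma Mpow_comm_gen n M A p : Mequiv n (Mmul n M A) (Mmul n A M) ->
  Mequiv n (Mmul n M (Mpow n A p)) (Mmul n (Mpow n A p) M).
Proof.
  intros H. induction p; simpl; [rewrite Mmul_id_l, Mmul_id_r; reflexivity|].
  rewrite <- Mmul_assoc, H, Mmul_assoc, IHp, Mmul_assoc. reflexivity.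
Qed.

Lemma Minvertible_intro n A B :
  Mequiv n (Mmul n A B) Mid -> Mequiv n (Mmul n B A) Mid -> Minvertible n A.
Proof. intros H1 H2. exists B. split; apply (proj1 (Mequiv_Meq _ _ _)); assumption. Qed.

Lemma Minv_spec n A : Minvertible n A ->
  Mequiv n (Mmul n A (Minv n A)) Mid /\ Mequiv n (Mmul n (Minv n A) A) Mid.
Proof.
  intros H. unfold Minv. pose proof (epsilon_spec (inhabits M0) _ H) as [E1 E2].
  split; apply Mequiv_Meq; assumption.
Qed.

Lemma inv_unique n A B D : Mequiv n (Mmul n B A) Mid -> Mequiv n (Mmul n A D) Mid -> Mequiv n B D.
Proof.
  intros H1 H2. rewrite <- (Mmul_id_r n B), <- H2, <- Mmul_assoc, H1, Mmul_id_l. reflexivity.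
Qed.

Lemma Minv_eq n A B : Mequiv n (Mmul n A B) Mid -> Mequiv n (Mmul n B A) Mid -> Mequiv n (Minv n A) B.
Proof.
  intros H1 H2. destruct (Minv_spec n A (Minvertible_intro n A B H1 H2)). apply (inv_unique n A); auto.
Qed.

Lemma Minvertible_mul n A B : Minvertible n A -> Minvertible n B ->
  Minvertible n (Mmul n A B) /\ Mequiv n (Minv n (Mmul n A B)) (Mmul n (Minv n B) (Minv n A)).
Proof.
  intros HA HB. destruct (Minv_spec n A HA) as [A1 A2]. destruct (Minv_spec n B HB) as [B1 B2].
  assert (E1 : Mequiv n (Mmul n (Mmul n A B) (Mmul n (Minv n B) (Minv n A))) Mid).
  { rewrite Mmul_assoc, <- (Mmul_assoc n B), B1, Mmul_id_l. auto. }
  assert (E2 : Mequiv n (Mmul n (Mmul n (Minv n B) (Minv n A)) (Mmul n A B)) Mid).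
  { rewrite Mmul_assoc, <- (Mmul_assoc n (Minv n A)), A2, Mmul_id_l. auto. }
  split; [apply (Minvertible_intro n _ _ E1 E2) | apply Minv_eq; auto].
Qed.

Lemma Minvertible_Mequiv n A B : Mequiv n A B -> Minvertible n A -> Minvertible n B.
Proof.
  intros H HA. destruct (Minv_spec n A HA) as [H1 H2].
  apply (Minvertible_intro n B (Minv n A)); rewrite <- H; auto.
Qed.

Lemma Minv_Mequiv n A B : Mequiv n A B -> Minvertible n A -> Mequiv n (Minv n A) (Minv n B).
Proof. intros H HA. destruct (Minv_spec n A HA). symmetry. apply Minv_eq; rewrite <- H; auto. Qed.

(** * Matrix series *)

(* The entrywise l^1 norm of the n x n block; it bounds the powers entrywise. *)
Definition mnorm n (A : Mat) : R := Rsum n (fun i => Rsum n (fun j => Cnorm (A i j))).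

Lemma mnorm_ge0 n A : 0 <= mnorm n A.
Proof. apply Rsum_nonneg; intros; apply Rsum_nonneg; intros; apply Cnorm_ge0. Qed.

Lemma row_le_mnorm n A i : (i < n)%nat -> Rsum n (fun j => Cnorm (A i j)) <= mnorm n A.
Proof.
  intros Hi. apply (Rsum_ge_term n (fun i => Rsum n (fun j => Cnorm (A i j)))); auto.
  intros; apply Rsum_nonneg; intros; apply Cnorm_ge0.
Qed.

Lemma Mpow_bound n A p i j : (i < n)%nat -> (j < n)%nat ->
  Cnorm (Mpow n A p i j) <= (mnorm n A + 1) ^ p.
Proof.
  revert i j. induction p; intros i j Hi Hj; simpl.
  - unfold Mid. destruct (Nat.eqb i j); [rewrite Cnorm_C1 | rewrite Cnorm_C0]; lra.
  - eapply Rle_trans; [apply Cnorm_Csum|]. pose proof (mnorm_ge0 n A).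
    apply Rle_trans with (Rsum n (fun l => (mnorm n A + 1) ^ p * Cnorm (A i l))).
    + apply Rsum_le; intros l Hl. rewrite Cnorm_mul, Rmult_comm.
      apply Rmult_le_compat_r; [apply Cnorm_ge0 | auto].
    + rewrite Rsum_scal_l. pose proof (row_le_mnorm n A i Hi).
      rewrite Rmult_comm. apply Rmult_le_compat_r; [apply pow_le|]; lra.
Qed.

Definition mconv n (a : nat -> Mat) (E : Mat) : Prop :=
  forall i j, (i < n)%nat -> (j < n)%nat -> Ccv (fun m => Csum m (fun p => a p i j)) (E i j).

Lemma mconv_unique n a E1 E2 : mconv n a E1 -> mconv n a E2 -> Mequiv n E1 E2.
Proof. intros H1 H2. apply Mequiv_intro; intros i j Hi Hj. eapply Ccv_unique; [apply H1|apply H2]; auto. Qed.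

Lemma mconv_mseries n a :
  (forall i j, (i < n)%nat -> (j < n)%nat -> exists l, Ccv (fun m => Csum m (fun p => a p i j)) l) ->
  mconv n a (mseries n a).
Proof.
  intros H. set (lim := fun i j => epsilon (inhabits C0) (fun l => Ccv (fun m => Csum m (fun p => a p i j)) l)).
  apply (epsilon_spec (inhabits M0) (fun E => mconv n a E)). exists lim.
  intros i j Hi Hj. apply (epsilon_spec (inhabits C0) (fun l => Ccv (fun m => Csum m (fun p => a p i j)) l)). auto.
Qed.

Lemma mconv_Mequiv n a b E E' : (forall p, Mequiv n (a p) (b p)) -> Mequiv n E E' ->
  mconv n a E -> mconv n b E'.
Proof.
  intros Hab HE H i j Hi Hj. rewrite <- (Mequiv_elim n E E' i j HE Hi Hj).
  apply (Ccv_ext (fun m => Csum m (fun p => a p i j))); auto.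
  intros m; apply Csum_ext; intros p _; apply (Mequiv_elim n); auto.
Qed.

Lemma mconv_mseries_equiv n a b E : (forall p, Mequiv n (a p) (b p)) -> mconv n a E ->
  mconv n a (mseries n b).
Proof.
  intros Hab H. assert (Hb : mconv n b E) by (apply (mconv_Mequiv n a b E E Hab); [reflexivity | auto]).
  apply (mconv_Mequiv n b a (mseries n b)); [intros; symmetry; auto | reflexivity |].
  apply mconv_mseries. intros i j Hi Hj. exists (E i j). apply Hb; auto.
Qed.

Lemma mconv_mul_l n M a E : mconv n a E -> mconv n (fun p => Mmul n M (a p)) (Mmul n M E).
Proof.
  intros H i j Hi Hj. unfold Mmul.
  apply (Ccv_ext (fun m => Csum n (fun l => Cmul (M i l) (Csum m (fun p => a p l j))))).
  - intros m. rewrite Csum_swap. apply Csum_ext; intros. rewrite Csum_scal_l. auto.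
  - apply Ccv_Csum. intros l Hl. apply Ccv_scal. apply H; auto.
Qed.

Lemma mconv_mul_r n M a E : mconv n a E -> mconv n (fun p => Mmul n (a p) M) (Mmul n E M).
Proof.
  intros H i j Hi Hj. unfold Mmul.
  apply (Ccv_ext (fun m => Csum n (fun l => Cmul (Csum m (fun p => a p i l)) (M l j)))).
  - intros m. rewrite Csum_swap. apply Csum_ext; intros l _. rewrite <- Csum_scal_r. auto.
  - apply Ccv_Csum. intros l Hl.
    apply (Ccv_ext (fun m => Cmul (M l j) (Csum m (fun p => a p i l)))); [intros; ring|].
    replace (Cmul (E i l) (M l j)) with (Cmul (M l j) (E i l)) by ring. apply Ccv_scal, H; auto.
Qed.

Lemma mconv_comm n M a E : (forall p, Mequiv n (Mmul n M (a p)) (Mmul n (a p) M)) -> mconv n a E ->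
  Mequiv n (Mmul n M E) (Mmul n E M).
Proof.
  intros Hc H. apply (mconv_unique n (fun p => Mmul n M (a p))); [apply mconv_mul_l; auto|].
  apply (mconv_Mequiv n (fun p => Mmul n (a p) M) _ (Mmul n E M)); [intros; symmetry; auto | reflexivity|].
  apply mconv_mul_r; auto.
Qed.

Lemma mconv_drop0 n a b E : mconv n a E -> Mequiv n (b O) M0 -> (forall p, Mequiv n (b (S p)) (a (S p))) ->
  mconv n b (Msub E (a O)).
Proof.
  intros H H0 Hs i j Hi Hj. apply Ccv_shift.
  apply (Ccv_ext (fun m => Csub (Csum (S m) (fun p => a p i j)) (a O i j))).
  - intros m. rewrite !Csum_shift, (Mequiv_elim n _ _ i j H0 Hi Hj).
    rewrite (Csum_ext m (fun q => b (S q) i j) (fun q => a (S q) i j)) by (intros; apply (Mequiv_elim n); auto).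
    unfold M0. ring.
  - apply Ccv_sub; [apply (Ccv_shift (fun m => Csum m (fun p => a p i j))), H; auto | apply Ccv_const].
Qed.

Definition mps_term (c : nat -> Mat) (t : C) (p : nat) : Mat := Mscal (Cpow t p) (c p).
Definition mps_dcoef (c : nat -> Mat) (p : nat) : Mat := Mscal (INC (S p)) (c (S p)).

Definition mps_bounded n (c : nat -> Mat) (K R : R) : Prop :=
  forall i j, (i < n)%nat -> (j < n)%nat -> exp_bounded (fun p => c p i j) K R.

Lemma mps_partial_sum c t m i j : Csum m (fun p => mps_term c t p i j) = psum (fun p => c p i j) t m.
Proof. apply Csum_ext; intros. unfold mps_term, Mscal. ring. Qed.

Lemma mps_conv n c K R t : 0 <= R -> mps_bounded n c K R ->
  mconv n (mps_term c t) (mseries n (mps_term c t)).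
Proof.
  intros HR Hc. apply mconv_mseries. intros i j Hi Hj.
  destruct (psum_conv _ K R t HR (Hc i j Hi Hj)) as [l Hl]. exists l.
  apply (Ccv_ext (psum (fun p => c p i j) t)); auto. intro m; symmetry; exact (mps_partial_sum _ _ m i j).
Qed.

Lemma mps_at_0 n c F : mconv n (mps_term c C0) F -> Mequiv n F (c O).
Proof.
  intros H. apply Mequiv_intro; intros i j Hi Hj. apply (Ccv_unique (psum (fun p => c p i j) C0)).
  - apply (Ccv_ext (fun m => Csum m (fun p => mps_term c C0 p i j))); [intro m; exact (mps_partial_sum _ _ m i j) | apply H; auto].
  - apply psum_at_0.
Qed.

Lemma mps_deriv n c K R F G i j t : 0 <= K -> 0 <= R -> mps_bounded n c K R ->
  (forall t, mconv n (mps_term c t) (F t)) -> (forall t, mconv n (mps_term (mps_dcoef c) t) (G t)) ->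
  (i < n)%nat -> (j < n)%nat -> Cderiv (fun t => F t i j) t (G t i j).
Proof.
  intros HK HR Hc HF HG Hi Hj.
  apply (psum_deriv (fun p => c p i j) K R (fun t => F t i j) (fun t => G t i j)); auto; intro s.
  - apply (Ccv_ext (fun m => Csum m (fun p => mps_term c s p i j))); [intro m; exact (mps_partial_sum _ _ m i j) | apply HF; auto].
  - apply (Ccv_ext (fun m => Csum m (fun p => mps_term (mps_dcoef c) s p i j)));
      [intro m; exact (mps_partial_sum _ _ m i j) | apply HG; auto].
Qed.

Lemma Mmul_deriv n (P Q : C -> Mat) (P' Q' : Mat) i j t :
  (forall l, (l < n)%nat -> Cderiv (fun t => P t i l) t (P' i l)) ->
  (forall l, (l < n)%nat -> Cderiv (fun t => Q t l j) t (Q' l j)) ->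
  Cderiv (fun t => Mmul n (P t) (Q t) i j) t
         (Csum n (fun l => Cadd (Cmul (P' i l) (Q t l j)) (Cmul (P t i l) (Q' l j)))).
Proof.
  intros HP HQ. apply (Cderiv_Csum n (fun l t => Cmul (P t i l) (Q t l j))).
  intros l Hl. apply (Cderiv_mul (fun t => P t i l) (fun t => Q t l j)); auto.
Qed.

Lemma Mmul_deriv_const_l n X (Q : C -> Mat) (Q' : Mat) i j t :
  (forall l, (l < n)%nat -> Cderiv (fun t => Q t l j) t (Q' l j)) ->
  Cderiv (fun t => Mmul n X (Q t) i j) t (Mmul n X Q' i j).
Proof.
  intros HQ. eapply Cderiv_ext; [intro; reflexivity|].
  replace (Mmul n X Q' i j) with
    (Csum n (fun l => Cadd (Cmul (M0 i l) (Q t l j)) (Cmul (X i l) (Q' l j))))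
    by (apply Csum_ext; intros; unfold M0; ring).
  apply (Mmul_deriv n (fun _ => X) Q M0 Q'); auto. intros; apply Cderiv_const.
Qed.

(** * The exponential e^(-tB) *)

Definition expNeg n (B : Mat) (t : C) : Mat := mexp n (Mscal (Copp t) B).

(* e^(-tB) = sum_p t^p (-1)^p B^p / p! *)
Definition exp_coef n (B : Mat) (p : nat) : Mat :=
  Mscal (Cmul (Cpow (Copp C1) p) (RC (/ INR (fact p)))) (Mpow n B p).

Lemma exp_coef_bounded n B : mps_bounded n (exp_coef n B) 1 (mnorm n B + 1).
Proof.
  intros i j Hi Hj p. unfold exp_coef, Mscal. pose proof (INR_fact_lt_0 p).
  rewrite !Cnorm_mul, Cnorm_pow, Cnorm_opp, Cnorm_C1, pow1, Cnorm_RC.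
  rewrite Rabs_right by (left; apply Rinv_0_lt_compat; auto).
  pose proof (Mpow_bound n B p i j Hi Hj).
  replace (1 * ((mnorm n B + 1) ^ p / INR (fact p))) with (1 * / INR (fact p) * (mnorm n B + 1) ^ p)
    by (field; lra).
  apply Rmult_le_compat_l; [left; apply Rmult_lt_0_compat; [lra | apply Rinv_0_lt_compat]|]; auto.
Qed.

Lemma expNeg_conv n B t : mconv n (mps_term (exp_coef n B) t) (expNeg n B t).
Proof.
  apply (mconv_mseries_equiv n _ _ (mseries n (mps_term (exp_coef n B) t))).
  - intros p. unfold mps_term, exp_coef. rewrite Mpow_scal.
    apply Mequiv_intro; intros; unfold Mscal.
    replace (Copp t) with (Cmul (Copp C1) t) by ring. rewrite Cpow_mul. ring.
  - apply (mps_conv n _ 1 (mnorm n B + 1)); [pose proof (mnorm_ge0 n B); lra | apply exp_coef_bounded].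
Qed.

Lemma expNeg_0 n B : Mequiv n (expNeg n B C0) Mid.
Proof.
  rewrite (mps_at_0 n (exp_coef n B) _ (expNeg_conv n B C0)).
  apply Mequiv_intro; intros i j _ _. unfold exp_coef, Mscal. simpl. rewrite Rinv_1.
  change (RC 1) with C1. ring.
Qed.

Lemma expNeg_comm n M B t : Mequiv n (Mmul n M B) (Mmul n B M) ->
  Mequiv n (Mmul n M (expNeg n B t)) (Mmul n (expNeg n B t) M).
Proof.
  intros H. apply (mconv_comm n M (mps_term (exp_coef n B) t)); [|apply expNeg_conv].
  intros p. unfold mps_term, exp_coef. rewrite !Mmul_scal_l, !Mmul_scal_r.
  apply Mscal_proper, Mscal_proper, Mpow_comm_gen; auto.
Qed.

Lemma exp_dcoef n B t p :
  Mequiv n (mps_term (mps_dcoef (exp_coef n B)) t p)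
           (Mmul n (Mscal (Copp C1) B) (mps_term (exp_coef n B) t p)).
Proof.
  unfold mps_term, mps_dcoef, exp_coef. rewrite Mmul_scal_l, !Mmul_scal_r.
  apply Mequiv_intro; intros i j _ _. unfold Mscal. cbn [Mpow Cpow].
  rewrite <- (fact_INC p). ring.
Qed.

Lemma expNeg_deriv n B i j t : (i < n)%nat -> (j < n)%nat ->
  Cderiv (fun t => expNeg n B t i j) t (Copp (Mmul n B (expNeg n B t) i j)).
Proof.
  intros Hi Hj.
  replace (Copp (Mmul n B (expNeg n B t) i j))
    with (Mmul n (Mscal (Copp C1) B) (expNeg n B t) i j)
    by (rewrite Mmul_scal_l; unfold Mscal; ring).
  apply (mps_deriv n (exp_coef n B) 1 (mnorm n B + 1) (expNeg n B)
           (fun s => Mmul n (Mscal (Copp C1) B) (expNeg n B s))); auto; try lra.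
  - pose proof (mnorm_ge0 n B); lra.
  - apply exp_coef_bounded.
  - apply expNeg_conv.
  - intro s. apply (mconv_Mequiv n (fun p => Mmul n (Mscal (Copp C1) B) (mps_term (exp_coef n B) s p))
                                _ (Mmul n (Mscal (Copp C1) B) (expNeg n B s)));
      [intro p; symmetry; apply exp_dcoef | reflexivity |].
    apply mconv_mul_l, expNeg_conv.
Qed.

(* e^(-tB) e^(tB) = Id: the product has zero derivative and equals Id at 0. *)
Lemma expNeg_inv_l n B t : Mequiv n (Mmul n (expNeg n B t) (expNeg n (Mscal (Copp C1) B) t)) Mid.
Proof.
  set (B' := Mscal (Copp C1) B).
  apply Mequiv_intro; intros i j Hi Hj.
  set (G := fun t => Mmul n (expNeg n B t) (expNeg n B' t) i j).
  assert (HG : forall t, Cderiv G t C0).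
  { intro s.
    assert (Hval : Csum n (fun l => Cadd (Cmul (Copp (Mmul n B (expNeg n B s) i l)) (expNeg n B' s l j))
                                       (Cmul (expNeg n B s i l) (Copp (Mmul n B' (expNeg n B' s) l j))))
                   = C0).
    { rewrite Csum_add.
      transitivity (Cadd (Copp (Mmul n (Mmul n B (expNeg n B s)) (expNeg n B' s) i j))
                         (Mmul n (Mmul n (expNeg n B s) B) (expNeg n B' s) i j)).
      - f_equal.
        + rewrite (Mmul_entry n (Mmul n B (expNeg n B s))), <- Csum_opp. apply Csum_ext; intros; ring.
        + rewrite Mmul_assoc, (Mmul_entry n (expNeg n B s)). apply Csum_ext; intros l Hl.
          unfold B'. rewrite Mmul_scal_l. unfold Mscal. ring.
      - rewrite (Mequiv_elim n _ _ i j (Mmul_proper n _ _ (expNeg_comm n B B s (reflexivity _))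
                                           _ _ (reflexivity (expNeg n B' s))) Hi Hj). ring. }
    rewrite <- Hval.
    apply (Mmul_deriv n (expNeg n B) (expNeg n B') (fun a b => Copp (Mmul n B (expNeg n B s) a b))
             (fun a b => Copp (Mmul n B' (expNeg n B' s) a b)));
      intros l Hl; apply expNeg_deriv; auto. }
  unfold G in HG. rewrite (Cderiv_zero_const _ HG t).
  rewrite (Mequiv_elim n _ _ i j (Mmul_proper n _ _ (expNeg_0 n B) _ _ (expNeg_0 n B')) Hi Hj).
  apply (Mequiv_elim n _ _ i j (Mmul_id_l n Mid)); auto.
Qed.

Lemma expNeg_invertible n B t : Minvertible n (expNeg n B t).
Proof.
  apply (Minvertible_intro n _ (expNeg n (Mscal (Copp C1) B) t)); [apply expNeg_inv_l|].
  pose proof (expNeg_inv_l n (Mscal (Copp C1) B) t) as H.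
  replace (Mscal (Copp C1) (Mscal (Copp C1) B)) with B in H; auto.
  apply functional_extensionality; intro i; apply functional_extensionality; intro j. unfold Mscal. ring.
Qed.

(** * The series Y^(-1) (e^(-tY^k) - Id) *)

(* Y^(-1)(e^(-tY^k) - Id) = sum_(p >= 1) t^p (-1)^p Y^(kp-1) / p! *)
Definition yinv_coef n (Y : Mat) (k p : nat) : Mat :=
  match p with
  | O => M0
  | S _ => Mscal (Cmul (Cpow (Copp C1) p) (RC (/ INR (fact p)))) (Mpow n Y (k * p - 1))
  end.

Lemma yinv_coef_bounded n Y k : mps_bounded n (yinv_coef n Y k) 1 ((mnorm n Y + 1) ^ k).
Proof.
  intros i j Hi Hj p. pose proof (INR_fact_lt_0 p). pose proof (mnorm_ge0 n Y).
  assert (0 <= ((mnorm n Y + 1) ^ k) ^ p / INR (fact p)).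
  { apply Rmult_le_pos; [apply pow_le, pow_le; lra | left; apply Rinv_0_lt_compat; auto]. }
  destruct p as [|p]; [unfold yinv_coef, M0; rewrite Cnorm_C0; lra|].
  unfold yinv_coef, Mscal.
  rewrite !Cnorm_mul, Cnorm_pow, Cnorm_opp, Cnorm_C1, pow1, Cnorm_RC.
  rewrite Rabs_right by (left; apply Rinv_0_lt_compat; auto).
  pose proof (Mpow_bound n Y (k * S p - 1) i j Hi Hj).
  assert ((mnorm n Y + 1) ^ (k * S p - 1) <= ((mnorm n Y + 1) ^ k) ^ S p)
    by (rewrite <- pow_mult; apply Rle_pow; [lra | lia]).
  replace (1 * (((mnorm n Y + 1) ^ k) ^ S p / INR (fact (S p))))
    with (1 * / INR (fact (S p)) * ((mnorm n Y + 1) ^ k) ^ S p) by (field; lra).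
  apply Rmult_le_compat_l; [left; apply Rmult_lt_0_compat; [lra | apply Rinv_0_lt_compat; auto]|]. lra.
Qed.

Lemma Yinv_conv n Y k t : mconv n (mps_term (yinv_coef n Y k) t) (Yinv_expm1 n Y k t).
Proof.
  apply (mconv_mseries_equiv n _ _ (mseries n (mps_term (yinv_coef n Y k) t))).
  - intros [|p]; apply Mequiv_intro; intros; unfold mps_term, yinv_coef, Mscal, M0; [ring|].
    replace (Copp t) with (Cmul (Copp C1) t) by ring. rewrite Cpow_mul. ring.
  - apply (mps_conv n _ 1 ((mnorm n Y + 1) ^ k));
      [apply pow_le; pose proof (mnorm_ge0 n Y); lra | apply yinv_coef_bounded].
Qed.

Lemma Yinv_0 n Y k : Mequiv n (Yinv_expm1 n Y k C0) M0.
Proof. exact (mps_at_0 n (yinv_coef n Y k) _ (Yinv_conv n Y k C0)). Qed.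

Lemma yinv_dcoef n Y k t p : (1 <= k)%nat ->
  Mequiv n (mps_term (mps_dcoef (yinv_coef n Y k)) t p)
           (Mmul n (Mscal (Copp C1) (Mpow n Y (k - 1))) (mps_term (exp_coef n (Mpow n Y k)) t p)).
Proof.
  intros Hk. unfold mps_term, mps_dcoef, yinv_coef, exp_coef.
  rewrite Mmul_scal_l, !Mmul_scal_r, Mpow_mul, Mpow_add.
  replace (k - 1 + k * p)%nat with (k * S p - 1)%nat by lia.
  apply Mequiv_intro; intros i j _ _. unfold Mscal. cbn [Cpow].
  rewrite <- (fact_INC p). ring.
Qed.

Lemma Yinv_deriv n Y k i j t : (1 <= k)%nat -> (i < n)%nat -> (j < n)%nat ->
  Cderiv (fun t => Yinv_expm1 n Y k t i j) t
         (Copp (Mmul n (Mpow n Y (k - 1)) (expNeg n (Mpow n Y k) t) i j)).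
Proof.
  intros Hk Hi Hj. set (A := Mscal (Copp C1) (Mpow n Y (k - 1))).
  replace (Copp (Mmul n (Mpow n Y (k - 1)) (expNeg n (Mpow n Y k) t) i j))
    with (Mmul n A (expNeg n (Mpow n Y k) t) i j) by (unfold A; rewrite Mmul_scal_l; unfold Mscal; ring).
  apply (mps_deriv n (yinv_coef n Y k) 1 ((mnorm n Y + 1) ^ k) (Yinv_expm1 n Y k)
           (fun s => Mmul n A (expNeg n (Mpow n Y k) s))); auto; try lra.
  - apply pow_le; pose proof (mnorm_ge0 n Y); lra.
  - apply yinv_coef_bounded.
  - apply Yinv_conv.
  - intro s. apply (mconv_Mequiv n (fun p => Mmul n A (mps_term (exp_coef n (Mpow n Y k)) s p))
                                _ (Mmul n A (expNeg n (Mpow n Y k) s)));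
      [intro p; symmetry; apply yinv_dcoef; auto | reflexivity |].
    apply mconv_mul_l, expNeg_conv.
Qed.

Lemma Yinv_mul_l n Y k t : (1 <= k)%nat ->
  Mequiv n (Mmul n Y (Yinv_expm1 n Y k t)) (Msub (expNeg n (Mpow n Y k) t) Mid).
Proof.
  intros Hk. apply (mconv_unique n (fun p => Mmul n Y (mps_term (yinv_coef n Y k) t p))).
  - apply mconv_mul_l, Yinv_conv.
  - assert (H0 : Mequiv n (mps_term (exp_coef n (Mpow n Y k)) t O) Mid).
    { apply Mequiv_intro; intros; unfold mps_term, exp_coef, Mscal; simpl. rewrite Rinv_1.
      change (RC 1) with C1. ring. }
    apply (mconv_Mequiv n (fun p => Mmul n Y (mps_term (yinv_coef n Y k) t p)) _
             (Msub (expNeg n (Mpow n Y k) t) (mps_term (exp_coef n (Mpow n Y k)) t O)));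
      [intros; reflexivity | apply Mequiv_intro; intros; unfold Msub; rewrite (Mequiv_elim n _ _ i j H0); auto |].
    apply mconv_drop0; [apply expNeg_conv | |].
    + apply Mequiv_intro; intros; unfold mps_term, yinv_coef, Mscal, M0, Mmul. apply Csum_zero; intros; ring.
    + intros p. unfold mps_term, yinv_coef, exp_coef. rewrite !Mmul_scal_r, Mpow_mul.
      change (Mmul n Y (Mpow n Y (k * S p - 1))) with (Mpow n Y (S (k * S p - 1))).
      replace (S (k * S p - 1)) with (k * S p)%nat by lia. reflexivity.
Qed.

(* Y commutes with the series, being a power series in Y. *)
Lemma Yinv_comm n Y k t : Mequiv n (Mmul n Y (Yinv_expm1 n Y k t)) (Mmul n (Yinv_expm1 n Y k t) Y).
Proof.
  apply (mconv_comm n Y (mps_term (yinv_coef n Y k) t)); [|apply Yinv_conv].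
  intros [|p]; unfold mps_term, yinv_coef.
  - apply Mequiv_intro; intros; unfold Mscal, M0, Mmul. rewrite !Csum_zero; intros; ring.
  - rewrite !Mmul_scal_l, !Mmul_scal_r. apply Mscal_proper, Mscal_proper, Mpow_comm_self.
Qed.

(** * The Hamiltonian vector field of H = (1/k) tr U^k *)

Lemma pd_eq H s c L : Cderiv (fun u => H (shift s c u)) C0 L -> pd H s c = L.
Proof.
  intros HL. apply (Cderiv_unique (fun u => H (shift s c u)) C0); auto.
  apply (epsilon_spec (inhabits C0) (fun L => Cderiv (fun u => H (shift s c u)) C0 L)). exists L; auto.
Qed.

(* H depends on U only. *)
Lemma pd_Htr_other n k s c : (forall u, sU (shift s c u) = sU s) -> pd (Htr n k) s c = C0.
Proof.
  intros Hc. apply pd_eq, (Cderiv_ext (fun _ => Htr n k s)); [|apply Cderiv_const].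
  intro u. unfold Htr. rewrite Hc. reflexivity.
Qed.

Definition Eunit (a b : nat) : Mat := fun i j => if andb (Nat.eqb i a) (Nat.eqb j b) then C1 else C0.

Lemma upd2_0 U a b : upd2 U a b C0 = U.
Proof.
  apply functional_extensionality; intro i; apply functional_extensionality; intro j.
  unfold upd2. destruct (andb _ _); auto. ring.
Qed.

Lemma upd2_deriv U a b i j : Cderiv (fun u => upd2 U a b u i j) C0 (Eunit a b i j).
Proof. unfold upd2, Eunit. destruct (andb _ _); [apply Cderiv_translate | apply Cderiv_const]. Qed.

(* Directional derivative of U |-> U^p in the direction E_ab:
   sum_(q < p) U^(p-1-q) E_ab U^q. *)
Fixpoint Mpow_dir n (U : Mat) (a b : nat) (p : nat) : Mat :=
  match p with
  | O => M0
  | S p' => Madd (Mmul n (Eunit a b) (Mpow n U p')) (Mmul n U (Mpow_dir n U a b p'))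
  end.

Lemma Mpow_upd2_deriv n U a b p i j :
  Cderiv (fun u => Mpow n (upd2 U a b u) p i j) C0 (Mpow_dir n U a b p i j).
Proof.
  revert i j. induction p; intros i j; simpl; [apply Cderiv_const|].
  pose proof (Mmul_deriv n (fun u => upd2 U a b u) (fun u => Mpow n (upd2 U a b u) p)
                (Eunit a b) (Mpow_dir n U a b p) i j C0) as HD.
  rewrite !upd2_0 in HD. unfold Madd. rewrite !Mmul_entry, <- Csum_add.
  apply HD; intros; [apply upd2_deriv | apply IHp].
Qed.

Lemma Mtr_Mequiv n A B : Mequiv n A B -> Mtr n A = Mtr n B.
Proof. intros H. apply Csum_ext; intros. apply (Mequiv_elim n); auto. Qed.

Lemma Mtr_add n A B : Mtr n (Madd A B) = Cadd (Mtr n A) (Mtr n B).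
Proof. apply Csum_add. Qed.

Lemma tr_unit n M N a b : (a < n)%nat -> (b < n)%nat ->
  Mtr n (Mmul n M (Mmul n (Eunit a b) N)) = Mmul n N M b a.
Proof.
  intros Ha Hb. unfold Mtr. rewrite Mmul_entry. apply Csum_ext; intros i Hi. rewrite Mmul_entry.
  transitivity (Csum n (fun l => Cmul (dlt l a) (Cmul (M i l) (N b i)))); [|rewrite Csum_dlt_l; auto; ring].
  apply Csum_ext; intros l Hl. rewrite Mmul_entry.
  transitivity (Cmul (M i l) (Cmul (dlt l a) (Csum n (fun x => Cmul (dlt x b) (N x i))))).
  - f_equal. rewrite <- Csum_scal_l. apply Csum_ext; intros x Hx. unfold Eunit, dlt.
    destruct (Nat.eqb l a), (Nat.eqb x b); simpl; ring.
  - rewrite Csum_dlt_l by auto. ring.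
Qed.

(* tr (U^m D_ab U^p) = p (U^(m+p-1))_ba: the cyclicity of the trace. *)
Lemma tr_Mpow_dir n U a b p m : (a < n)%nat -> (b < n)%nat ->
  Mtr n (Mmul n (Mpow n U m) (Mpow_dir n U a b p)) = Cmul (INC p) (Mpow n U (m + p - 1) b a).
Proof.
  intros Ha Hb. revert m. induction p; intros m.
  - simpl. rewrite INC_0. unfold Mtr. rewrite Csum_zero; [ring|].
    intros. unfold Mmul, M0. apply Csum_zero; intros; ring.
  - simpl Mpow_dir. rewrite Mmul_add_r, Mtr_add, tr_unit, <- Mmul_assoc by auto.
    rewrite (Mtr_Mequiv n _ (Mmul n (Mpow n U (S m)) (Mpow_dir n U a b p)))
      by (apply Mmul_proper; [symmetry; apply Mpow_S_r | reflexivity]).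
    rewrite IHp, (Mequiv_elim n _ _ b a (Mpow_add n U p m) Hb Ha), INC_S.
    destruct p as [|p].
    + rewrite INC_0. replace (m + 1 - 1)%nat with (0 + m)%nat by lia. ring.
    + replace (S m + S p - 1)%nat with (S p + m)%nat by lia.
      replace (m + S (S p) - 1)%nat with (S p + m)%nat by lia. ring.
Qed.

Lemma pd_Htr_U n k s a b : (1 <= k)%nat -> (a < n)%nat -> (b < n)%nat ->
  pd (Htr n k) s (cU a b) = Mpow n (sU s) (k - 1) b a.
Proof.
  intros Hk Ha Hb. apply pd_eq. unfold Htr. simpl.
  replace (Mpow n (sU s) (k - 1) b a) with (Cmul (Cinv (INC k)) (Mtr n (Mpow_dir n (sU s) a b k))).
  - apply Cderiv_scal, (Cderiv_Csum n (fun l u => Mpow n (upd2 (sU s) a b u) k l l)).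
    intros; apply Mpow_upd2_deriv.
  - rewrite (Mtr_Mequiv n _ (Mmul n (Mpow n (sU s) 0) (Mpow_dir n (sU s) a b k)))
      by (symmetry; apply Mmul_id_l).
    rewrite tr_Mpow_dir by auto. simpl (0 + k)%nat. field. apply INC_neq0; auto.
Qed.

Definition dsum n (f : nat -> nat -> C) : C := Csum n (fun a => Csum n (fun b => f a b)).

Lemma dsum_ext n f g : (forall a b, (a < n)%nat -> (b < n)%nat -> f a b = g a b) -> dsum n f = dsum n g.
Proof. intros H. apply Csum_ext; intros. apply Csum_ext; intros. auto. Qed.

Lemma dsum_add n f g : dsum n (fun a b => Cadd (f a b) (g a b)) = Cadd (dsum n f) (dsum n g).
Proof. unfold dsum. rewrite <- Csum_add. apply Csum_ext; intros. apply Csum_add. Qed.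

Lemma dsum_opp n f : dsum n (fun a b => Copp (f a b)) = Copp (dsum n f).
Proof. unfold dsum. rewrite <- Csum_opp. apply Csum_ext; intros. apply Csum_opp. Qed.

Lemma dsum_scal n c f : dsum n (fun a b => Cmul c (f a b)) = Cmul c (dsum n f).
Proof. unfold dsum. rewrite <- Csum_scal_l. apply Csum_ext; intros. apply Csum_scal_l. Qed.

Lemma dsum_sub n f g : dsum n (fun a b => Csub (f a b) (g a b)) = Csub (dsum n f) (dsum n g).
Proof. unfold Csub. rewrite <- dsum_opp, <- dsum_add. reflexivity. Qed.

(* The four contraction patterns met when pairing (A^T)_ab with a bracket:
   sum_ab A_ba P_aj Q_ib with P, Q each either a delta or a matrix. *)
Lemma dsum_dd n A i j : (i < n)%nat -> (j < n)%nat ->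
  dsum n (fun a b => Cmul (A b a) (Cmul (dlt a j) (dlt i b))) = A i j.
Proof.
  intros Hi Hj. unfold dsum. transitivity (Csum n (fun a => Cmul (A i a) (dlt a j))).
  - apply Csum_ext; intros a Ha. rewrite <- (Csum_dlt_l' n i (fun b => Cmul (A b a) (dlt a j))) by auto.
    apply Csum_ext; intros; ring.
  - apply (Csum_dlt_r n j (fun a => A i a)); auto.
Qed.

Lemma dsum_md n A P i j : (i < n)%nat ->
  dsum n (fun a b => Cmul (A b a) (Cmul (P a j) (dlt i b))) = Mmul n A P i j.
Proof.
  intros Hi. unfold dsum. rewrite Mmul_entry. apply Csum_ext; intros a Ha.
  rewrite <- (Csum_dlt_l' n i (fun b => Cmul (A b a) (P a j))) by auto.
  apply Csum_ext; intros; ring.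
Qed.

Lemma dsum_dm n A Q i j : (j < n)%nat ->
  dsum n (fun a b => Cmul (A b a) (Cmul (dlt a j) (Q i b))) = Mmul n Q A i j.
Proof.
  intros Hj. unfold dsum. rewrite Csum_swap, Mmul_entry. apply Csum_ext; intros b Hb.
  rewrite <- (Csum_dlt_l n j (fun a => Cmul (Q i b) (A b a))) by auto.
  apply Csum_ext; intros; ring.
Qed.

Lemma dsum_mm n A P Q i j :
  dsum n (fun a b => Cmul (A b a) (Cmul (P a j) (Q i b))) = Mmul n Q (Mmul n A P) i j.
Proof.
  unfold dsum. rewrite Csum_swap, Mmul_entry. apply Csum_ext; intros b Hb.
  rewrite Mmul_entry, <- Csum_scal_l. apply Csum_ext; intros; ring.
Qed.

Lemma HamVF_reduce isY n d k s c : (1 <= k)%nat ->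
  HamVF isY n d (Htr n k) s c = dsum n (fun a b => Cmul (Mpow n (sU s) (k - 1) b a) (pb isY n s (cU a b) c)).
Proof.
  intros Hk. unfold HamVF, sum_coords.
  rewrite (Csum_zero n (fun a => Csum n (fun b => Cmul (pd (Htr n k) s (cX a b)) _))),
          (Csum_zero d (fun a => Csum n (fun b => Cmul (pd (Htr n k) s (cV a b)) _))),
          (Csum_zero d (fun a => Csum n (fun b => Cmul (pd (Htr n k) s (cW a b)) _)))
    by (intros; apply Csum_zero; intros; rewrite pd_Htr_other by reflexivity; ring).
  transitivity (dsum n (fun a b => Cmul (pd (Htr n k) s (cU a b)) (pb isY n s (cU a b) c))).
  - unfold dsum. ring.
  - apply dsum_ext; intros. rewrite pd_Htr_U; auto.
Qed.

(* V_a and W_a viewed as the first row, resp. column, of a matrix. *)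
Definition Vm (v : nat -> C) : Mat := fun _ j => v j.
Definition Wm (w : nat -> C) : Mat := fun i _ => w i.

Section HamiltonianVectorField.
Variables (isY : bool) (n d k' : nat) (s : St).
Let U := sU s.
Let X := sX s.
(* dH/dU = (U^k')^T for k = k' + 1 *)
Let A := Mpow n U k'.

Lemma AU_comm : Mequiv n (Mmul n A U) (Mmul n U A).
Proof. unfold A. symmetry. apply Mpow_comm_self. Qed.

Lemma HamVF_X i j : (i < n)%nat -> (j < n)%nat ->
  HamVF isY n d (Htr n (S k')) s (cX i j) =
  Copp (Cadd (if isY then A i j else C0) (Mmul n X (Mpow n U (S k')) i j)).
Proof.
  intros Hi Hj. rewrite HamVF_reduce by lia. replace (S k' - 1)%nat with k' by lia. fold U A.
  transitivity (dsum n (fun a b => Copp (Cadd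
      (Cmul (if isY then C1 else C0) (Cmul (A b a) (Cmul (dlt a j) (dlt i b))))
      (Cmul Chalf (Cadd (Cadd (Cmul (A b a) (Cmul (Mmul n U X a j) (dlt i b)))
                              (Cmul (A b a) (Cmul (dlt a j) (Mmul n X U i b))))
                        (Csub (Cmul (A b a) (Cmul (U a j) (X i b))) (Cmul (A b a) (Cmul (X a j) (U i b))))))))).
  { apply dsum_ext; intros. simpl pb. unfold brXU. fold U X. destruct isY; ring. }
  rewrite dsum_opp, dsum_add, dsum_scal, dsum_scal, !dsum_add, dsum_sub.
  rewrite dsum_dd, dsum_md, dsum_dm, !dsum_mm by auto.
  f_equal. f_equal; [destruct isY; ring|].
  (* the four terms combine to X U A using that A commutes with U *)
  rewrite <- Mmul_assoc, (Mequiv_elim n _ _ i j (Mmul_proper n _ _ AU_comm _ _ (reflexivity X)) Hi Hj).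
  rewrite Mmul_assoc, (Mequiv_elim n _ _ i j (Mmul_proper n _ _ (reflexivity X) _ _ AU_comm) Hi Hj).
  rewrite (Mmul_assoc n X U A). simpl Mpow. fold U A.
  set (T := Mmul n X (Mmul n U A) i j).
  rewrite <- (Chalf_double T) at 3. f_equal. ring.
Qed.

Lemma HamVF_U i j : (i < n)%nat -> (j < n)%nat -> HamVF isY n d (Htr n (S k')) s (cU i j) = C0.
Proof.
  intros Hi Hj. rewrite HamVF_reduce by lia. replace (S k' - 1)%nat with k' by lia. fold U A.
  transitivity (dsum n (fun a b => Cmul Chalf (Csub (Cmul (A b a) (Cmul (Mmul n U U a j) (dlt i b)))
                                                   (Cmul (A b a) (Cmul (dlt a j) (Mmul n U U i b)))))).
  { apply dsum_ext; intros. simpl pb. fold U. ring. }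
  rewrite dsum_scal, dsum_sub, dsum_md, dsum_dm by auto.
  assert (H : Mequiv n (Mmul n A (Mmul n U U)) (Mmul n (Mmul n U U) A)).
  { rewrite <- Mmul_assoc, AU_comm, Mmul_assoc, AU_comm, Mmul_assoc. reflexivity. }
  rewrite (Mequiv_elim n _ _ i j H Hi Hj). ring.
Qed.

Lemma HamVF_V a l : (0 < n)%nat -> (l < n)%nat -> HamVF isY n d (Htr n (S k')) s (cV a l) = C0.
Proof.
  intros Hn Hl. rewrite HamVF_reduce by lia. replace (S k' - 1)%nat with k' by lia. fold U A.
  set (v := sV s a).
  transitivity (dsum n (fun a' b => Cmul Chalf (Csub (Cmul (A b a') (Cmul (dlt a' l) (Mmul n (Vm v) U 0%nat b)))
                                                    (Cmul (A b a') (Cmul (U a' l) (Vm v 0%nat b)))))).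
  { apply dsum_ext; intros. simpl pb. unfold brMV, VMv. fold U v. unfold Vm. rewrite Mmul_entry. ring. }
  rewrite dsum_scal, dsum_sub, dsum_dm, dsum_mm by auto.
  rewrite Mmul_assoc, (Mequiv_elim n _ _ 0%nat l (Mmul_proper n _ _ (reflexivity (Vm v)) _ _ AU_comm) Hn Hl).
  ring.
Qed.

Lemma HamVF_W a k : (0 < n)%nat -> (k < n)%nat -> HamVF isY n d (Htr n (S k')) s (cW a k) = C0.
Proof.
  intros Hn Hk. rewrite HamVF_reduce by lia. replace (S k' - 1)%nat with k' by lia. fold U A.
  set (w := sW s a).
  transitivity (dsum n (fun a' b => Cmul Chalf (Csub (Cmul (A b a') (Cmul (Mmul n U (Wm w) a' 0%nat) (dlt k b)))
                                                    (Cmul (A b a') (Cmul (Wm w a' 0%nat) (U k b)))))).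
  { apply dsum_ext; intros. simpl pb. unfold brMW, MWv. fold U w. unfold Wm. rewrite Mmul_entry. ring. }
  rewrite dsum_scal, dsum_sub, dsum_md, dsum_mm by auto.
  rewrite <- Mmul_assoc, (Mequiv_elim n _ _ k 0%nat (Mmul_proper n _ _ AU_comm _ _ (reflexivity (Wm w))) Hk Hn).
  rewrite Mmul_assoc. ring.
Qed.

End HamiltonianVectorField.

(** * The flows *)

(* A curve moving only X integrates the vector field of H as soon as its
   X-component does, since {H, U} = {H, V} = {H, W} = 0. *)
Lemma is_flow_X_only isY n d k' (Xt : C -> Mat) s : (0 < n)%nat ->
  (forall t i j, (i < n)%nat -> (j < n)%nat ->
     Cderiv (fun t => Xt t i j) t
            (HamVF isY n d (Htr n (S k')) (mkSt (Xt t) (sU s) (sV s) (sW s)) (cX i j))) ->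
  is_flow isY n d (Htr n (S k')) (fun t => mkSt (Xt t) (sU s) (sV s) (sW s)).
Proof.
  intros Hn HX t [i j|i j|a j|a j] [Hi Hj]; simpl get.
  - apply HX; auto.
  - rewrite HamVF_U by auto. apply Cderiv_const.
  - rewrite HamVF_V by auto. apply Cderiv_const.
  - rewrite HamVF_W by auto. apply Cderiv_const.
Qed.

Lemma prodInv_VW n s s' m : sV s = sV s' -> sW s = sW s' -> prodInv n s m = prodInv n s' m.
Proof. intros HV HW. induction m; simpl; auto. rewrite IHm. unfold IdWV. rewrite HV, HW. auto. Qed.

Lemma expNeg_Mpow_comm n U k m t :
  Mequiv n (Mmul n (Mpow n U m) (expNeg n (Mpow n U k) t)) (Mmul n (expNeg n (Mpow n U k) t) (Mpow n U m)).
Proof. apply expNeg_comm, Mpow_comm. Qed.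

Lemma expNeg_U_comm n U k t :
  Mequiv n (Mmul n U (expNeg n (Mpow n U k) t)) (Mmul n (expNeg n (Mpow n U k) t) U).
Proof. apply expNeg_comm, Mpow_comm_self. Qed.

Lemma X_expNeg_deriv n X A i j t : (i < n)%nat -> (j < n)%nat ->
  Cderiv (fun t => Mmul n X (expNeg n A t) i j) t (Copp (Mmul n (Mmul n X (expNeg n A t)) A i j)).
Proof.
  intros Hi Hj.
  replace (Copp (Mmul n (Mmul n X (expNeg n A t)) A i j))
    with (Mmul n X (fun a b => Copp (Mmul n A (expNeg n A t) a b)) i j).
  - apply Mmul_deriv_const_l. intros; apply expNeg_deriv; auto.
  - rewrite Mmul_assoc, <- (Mequiv_elim n _ _ i j (Mmul_proper n _ _ (reflexivity X) _ _
                                  (expNeg_comm n A A t (reflexivity _))) Hi Hj).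
    rewrite !Mmul_entry, <- Csum_opp. apply Csum_ext; intros; ring.
Qed.

Section Flow1.
Variables (n d k' : nat) (q : C) (s : St).
Let U := sU s.
Let X := sX s.
Let E t := expNeg n (Mpow n U (S k')) t.

Lemma flow1_eq t : flow1 n (S k') s t = mkSt (Mmul n X (E t)) U (sV s) (sW s).
Proof. reflexivity. Qed.

Lemma flow1_init : stEq n d (flow1 n (S k') s C0) s.
Proof.
  intros [i j|i j|a j|a j] Hc; rewrite flow1_eq; simpl; auto. destruct Hc as [Hi Hj].
  unfold E. rewrite (Mequiv_elim n _ _ i j (Mmul_proper n _ _ (reflexivity X) _ _ (expNeg_0 n _)) Hi Hj).
  apply (Mequiv_elim n _ _ i j (Mmul_id_r n X)); auto.
Qed.

(* X(t) U X(t)^(-1) U^(-1) = X U X^(-1) U^(-1), because e^(-tU^k) commutes with U. *)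
Lemma flow1_complete t : inMtimes n d q s -> inMtimes n d q (flow1 n (S k') s t).
Proof.
  intros [HX [HU [HW HM]]]. rewrite flow1_eq.
  pose proof (expNeg_invertible n (Mpow n U (S k')) t) as HE. fold (E t) in HE.
  destruct (Minvertible_mul n X (E t) HX HE) as [HXE HXEi].
  split; [auto | split; [auto | split; [exact HW|]]].
  simpl. apply (proj1 (Mequiv_Meq _ _ _)). apply (proj2 (Mequiv_Meq _ _ _)) in HM.
  rewrite <- HM. fold U X.
  rewrite (prodInv_VW n (mkSt (Mmul n X (E t)) U (sV s) (sW s)) s d) by auto.
  apply Mmul_proper; [|reflexivity]. apply Mmul_proper; [|reflexivity].
  rewrite HXEi, <- !Mmul_assoc. apply Mmul_proper; [|reflexivity].
  assert (HEU : Mequiv n (Mmul n U (E t)) (Mmul n (E t) U)) by apply expNeg_U_comm.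
  rewrite (Mmul_assoc n X (E t) U), <- HEU.
  rewrite <- (Mmul_assoc n X U), (Mmul_assoc n (Mmul n X U)).
  destruct (Minv_spec n _ HE) as [E1 _]. rewrite E1. apply Mmul_id_r.
Qed.

Lemma flow1_is_flow : (0 < n)%nat -> is_flow false n d (Htr n (S k')) (flow1 n (S k') s).
Proof.
  intros Hn. apply (is_flow_X_only false n d k' (fun t => Mmul n X (E t)) s Hn).
  intros t i j Hi Hj. rewrite HamVF_X by auto. simpl sX; simpl sU. fold U.
  replace (Copp (Cadd C0 (Mmul n (Mmul n X (E t)) (Mpow n U (S k')) i j)))
    with (Copp (Mmul n (Mmul n X (E t)) (Mpow n U (S k')) i j)) by ring.
  apply X_expNeg_deriv; auto.
Qed.

End Flow1.

Section Flow2.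
Variables (n d k' : nat) (q : C) (s : St).
Let U := sU s.
Let X := sX s.
Let E t := expNeg n (Mpow n U (S k')) t.
Let J t := Yinv_expm1 n U (S k') t.

Lemma flow2_eq t : flow2 n (S k') s t = mkSt (Madd (Mmul n X (E t)) (J t)) U (sV s) (sW s).
Proof. reflexivity. Qed.

Lemma flow2_init : stEq n d (flow2 n (S k') s C0) s.
Proof.
  intros [i j|i j|a j|a j] Hc; rewrite flow2_eq; simpl; auto. destruct Hc as [Hi Hj]. unfold Madd, E, J.
  rewrite (Mequiv_elim n _ _ i j (Mmul_proper n _ _ (reflexivity X) _ _ (expNeg_0 n _)) Hi Hj).
  rewrite (Mequiv_elim n _ _ i j (Mmul_id_r n X) Hi Hj), (Mequiv_elim n _ _ i j (Yinv_0 n U (S k')) Hi Hj).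
  unfold M0. fold X. ring.
Qed.

Lemma EU_comm t : Mequiv n (Mmul n U (E t)) (Mmul n (E t) U).
Proof. apply expNeg_U_comm. Qed.

Lemma JU t : Mequiv n (Mmul n (J t) U) (Msub (E t) Mid).
Proof. unfold J. rewrite <- Yinv_comm. apply Yinv_mul_l. lia. Qed.

Lemma flow2_IXY t : Mequiv n (Madd Mid (Mmul n (Madd (Mmul n X (E t)) (J t)) U))
                             (Mmul n (Madd Mid (Mmul n X U)) (E t)).
Proof.
  rewrite Mmul_add_l, JU, Mmul_assoc, <- EU_comm, Mmul_add_l, Mmul_id_l, Mmul_assoc.
  apply Mequiv_intro; intros; unfold Madd, Msub; ring.
Qed.

Lemma flow2_IYX t : Mequiv n (Madd Mid (Mmul n U (Madd (Mmul n X (E t)) (J t))))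
                             (Mmul n (Madd Mid (Mmul n U X)) (E t)).
Proof.
  assert (HJ : Mequiv n (Mmul n U (J t)) (Msub (E t) Mid)) by (apply Yinv_mul_l; lia).
  rewrite Mmul_add_r, HJ, <- Mmul_assoc, Mmul_add_l, Mmul_id_l.
  apply Mequiv_intro; intros; unfold Madd, Msub; ring.
Qed.

(* The moment map is unchanged: the factors e^(-tY^k) cancel. *)
Lemma flow2_complete t : inM n d q s -> inM n d q (flow2 n (S k') s t).
Proof.
  intros [HXY [HYX [HW HM]]]. rewrite flow2_eq. cbv zeta in *. simpl sX; simpl sU.
  fold U X in HXY, HYX, HM.
  pose proof (expNeg_invertible n (Mpow n U (S k')) t) as HE. fold (E t) in HE.
  destruct (Minvertible_mul n _ _ HXY HE) as [I1 _].
  destruct (Minvertible_mul n _ _ HYX HE) as [I2 I2i].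
  pose proof (flow2_IXY t) as H1. pose proof (flow2_IYX t) as H2.
  split; [apply (Minvertible_Mequiv n _ _ (symmetry H1)); auto|].
  split; [apply (Minvertible_Mequiv n _ _ (symmetry H2)); auto|].
  split; [exact HW|].
  apply (proj1 (Mequiv_Meq _ _ _)). apply (proj2 (Mequiv_Meq _ _ _)) in HM. rewrite <- HM.
  rewrite (prodInv_VW n (mkSt (Madd (Mmul n X (E t)) (J t)) U (sV s) (sW s)) s d) by auto.
  apply Mmul_proper; [|reflexivity].
  rewrite H1, (Minv_Mequiv n _ _ H2) by (apply (Minvertible_Mequiv n _ _ (symmetry H2)); auto).
  rewrite I2i, Mmul_assoc, <- (Mmul_assoc n (E t)).
  destruct (Minv_spec n _ HE) as [E1 _]. rewrite E1, Mmul_id_l. reflexivity.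
Qed.

Lemma flow2_is_flow : (0 < n)%nat -> is_flow true n d (Htr n (S k')) (flow2 n (S k') s).
Proof.
  intros Hn. apply (is_flow_X_only true n d k' (fun t => Madd (Mmul n X (E t)) (J t)) s Hn).
  intros t i j Hi Hj. rewrite HamVF_X by auto. simpl sX; simpl sU. fold U.
  set (A := Mpow n U k').
  assert (HJ : Mequiv n (Mmul n (J t) (Mpow n U (S k'))) (Msub (Mmul n (E t) A) A)).
  { change (Mpow n U (S k')) with (Mmul n U A). rewrite <- Mmul_assoc, JU, Mmul_sub_l, Mmul_id_l.
    reflexivity. }
  assert (HEA : Mequiv n (Mmul n A (E t)) (Mmul n (E t) A)) by apply expNeg_Mpow_comm.
  replace (Copp (Cadd (A i j) (Mmul n (Madd (Mmul n X (E t)) (J t)) (Mpow n U (S k')) i j)))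
    with (Cadd (Copp (Mmul n (Mmul n X (E t)) (Mpow n U (S k')) i j)) (Copp (Mmul n A (E t) i j))).
  - unfold Madd. apply (Cderiv_add (fun t => Mmul n X (E t) i j) (fun t => J t i j)).
    + apply X_expNeg_deriv; auto.
    + pose proof (Yinv_deriv n U (S k') i j t ltac:(lia) Hi Hj) as HY.
      replace (S k' - 1)%nat with k' in HY by lia. exact HY.
  - rewrite Mmul_add_l. unfold Madd.
    rewrite (Mequiv_elim n _ _ i j HJ Hi Hj), (Mequiv_elim n _ _ i j HEA Hi Hj). unfold Msub. ring.
Qed.

End Flow2.

Theorem mainTheorem14 :
  forall (n d k : nat) (q : C),
    (1 <= n)%nat -> (1 <= d)%nat -> (1 <= k)%nat ->
    q <> C0 -> not_root_of_unity q ->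
    (forall s : St, inMtimes n d q s ->
       stEq n d (flow1 n k s C0) s /\
       (forall t, inMtimes n d q (flow1 n k s t)) /\
       is_flow false n d (Htr n k) (flow1 n k s)) /\
    (forall s : St, inM n d q s ->
       stEq n d (flow2 n k s C0) s /\
       (forall tau, inM n d q (flow2 n k s tau)) /\
       is_flow true n d (Htr n k) (flow2 n k s)).
Proof.
  intros n d k q Hn _ Hk _ _. destruct k as [|k']; [lia|].
  split; intros s Hs.
  - split; [apply flow1_init | split; [intro t; apply flow1_complete; auto | apply flow1_is_flow; lia]].
  - split; [apply flow2_init | split; [intro t; apply flow2_complete; auto | apply flow2_is_flow; lia]].
Qed.
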